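(* For every $n\ge0$ and $t\in(0,1)$, $$t\frac{d}{dt}\ln h_n(t)=\alpha+\beta+\gamma+2n+1-R_n(t),$$ hence for $n\ge1$, $t\frac{d\beta_n}{dt}=\beta_n(2-R_n+R_{n-1})$, and the function $H_n(t):=t(t-1)\frac{d}{dt}\ln D_n(t)$ satisfies $$H_n(t)=n(n+\alpha+\beta+\gamma)(t-1)-(t-1)\sum_{j=0}^{n-1}R_j(t).$$
   Context: Fix $\alpha,\beta,\gamma>0$ and real constants $A,B$ with $A\ge0$, $A+B\ge0$, not both $A$ and $A+B$ equal to $0$. Let $\theta$ be the Heaviside function ($\theta(x)=1$ for $x>0$, $0$ otherwise). For $t\in(0,1)$ put $w(x,t)=x^{\alpha}(1-x)^{\beta}|x-t|^{\gamma}(A+B\theta(x-t))$ on $[0,1]$. Let $P_n(x,t)$ be the monic orthogonal polynomials w.r.t. $w(\cdot,t)$ on $[0,1]$, $\int_0^1P_mP_nw\,dx=h_n(t)\delta_{mn}$, $\beta_n=h_n/h_{n-1}$. Let $D_n(t)=\det\left(\int_0^1x^{i+j}w(x,t)dx\right)_{i,j=0}^{n-1}=\prod_{j=0}^{n-1}h_j(t)$. Define $R_n(t)=\frac{\beta}{h_n}\int_0^1\frac{P_n^2(y,t)w(y,t)}{1-y}dy$. *)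

From Stdlib Require Import Reals Lra.
Open Scope R_scope.

Fixpoint sumR (f : nat -> R) (n : nat) : R :=
  match n with O => 0 | S k => sumR f k + f k end.

Fixpoint prodR (f : nat -> R) (n : nat) : R :=
  match n with O => 1 | S k => prodR f k * f k end.

Definition theta (x : R) : R := if Rlt_dec 0 x then 1 else 0.

(* x^a for x >= 0, a > 0, with the convention 0^a = 0 *)
Definition pw (x a : R) : R := if Rlt_dec 0 x then Rpower x a else 0.

Definition weight (al be ga A B t x : R) : R :=
  pw x al * pw (1 - x) be * pw (Rabs (x - t)) ga * (A + B * theta (x - t)).

(* (possibly improper at the endpoint 1) integral over [0,1]:
   int_0^1 f = I  means  lim_{c -> 1^-} (Riemann) int_0^c f = I *)
Definition Integral01 (f : R -> R) (I : R) : Prop :=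
  forall eps, 0 < eps -> exists delta, 0 < delta /\
    forall c, 1 - delta < c < 1 ->
      exists pr : Riemann_integrable f 0 c, Rabs (RiemannInt pr - I) < eps.

Definition monic_poly (n : nat) (p : R -> R) : Prop :=
  exists c : nat -> R, forall x, p x = x ^ n + sumR (fun k => c k * x ^ k) n.

From Stdlib Require Import Reals Lra Lia Classical.
From Coquelicot Require Import Coquelicot.
Open Scope R_scope.

(* 1. Euler identity.  For a C^1 function f let J f s = int_0^1 f w(.,s).  Splitting the
      integral at x = s and rescaling both halves to [0,1], J f is differentiable
      (differentiation under the integral sign); integrating by parts on [s,c] and letting
      c -> 1^- (the integral of f w / (1-x) is improper at 1) gives
        s (J f)'(s) = (al+be+ga) J f s + J (f + x f') s - be int_0^1 f w(.,s) / (1-x).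
   2. Differentiability of h_n.  Nothing is assumed about how P_n(.,t) depends on t.  We
      compare h_n(s) with the moment M(s) = J (P_n(.,t)^2) s of the polynomial frozen at t:
      expanding P_n(.,s) - P_n(.,t) in the basis P_k(.,t), k < n, orthogonality at s and the
      positivity of the Gram matrix near s = t give |h_n(s) - M(s)| <= C (s-t)^2, hence
      h_n'(t) = M'(t).
   3. Taking f = P_n^2 in the Euler identity, orthogonality turns J (f + x f') into
      (2n+1) h_n, so t h_n'(t) = (al+be+ga+2n+1 - R_n(t)) h_n(t).  The three claims follow by
      the chain rule for ln, the quotient rule for h_n / h_(n-1) and the product rule for
      D_n = prod_j h_j. *)

Lemma pw_pos x a : 0 < x -> pw x a = Rpower x a.
Proof. intros H; unfold pw; destruct (Rlt_dec 0 x); [reflexivity|lra]. Qed.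

Lemma pw_nonpos x a : x <= 0 -> pw x a = 0.
Proof. intros H; unfold pw; destruct (Rlt_dec 0 x); [lra|reflexivity]. Qed.

Lemma pw_ge0 x a : 0 <= pw x a.
Proof. unfold pw; destruct (Rlt_dec 0 x); [unfold Rpower; left; apply exp_pos|lra]. Qed.

Lemma pw_gt0 x a : 0 < x -> 0 < pw x a.
Proof. intros H; rewrite pw_pos by lra; unfold Rpower; apply exp_pos. Qed.

Lemma pw_0 a : pw 0 a = 0.
Proof. apply pw_nonpos; lra. Qed.

Lemma pw_pred_mul x a : 0 < x -> pw x (a - 1) * x = pw x a.
Proof.
  intros H; rewrite !pw_pos by lra.
  rewrite <- (Rpower_1 x) at 2 by lra. rewrite <- Rpower_plus. f_equal; ring.
Qed.

Lemma pw_pred x a : 0 < x -> pw x (a - 1) = pw x a / x.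
Proof. intros H; rewrite <- (pw_pred_mul x a H); field; lra. Qed.

Lemma pw_succ x a : 0 <= x -> pw x (a + 1) = pw x a * x.
Proof.
  intros H; destruct (Req_dec x 0) as [->|H0].
  - rewrite !pw_0; ring.
  - rewrite <- (pw_pred_mul x (a+1)) by lra. replace (a+1-1) with a by ring; reflexivity.
Qed.

Lemma pw_deriv_pos x a : 0 < x -> is_derive (fun y => pw y a) x (a * pw x (a - 1)).
Proof.
  intros H. apply is_derive_ext_loc with (fun y => Rpower y a).
  - apply locally_interval with (Finite 0) p_infty; simpl; auto.
    intros y Hy _; rewrite pw_pos; auto.
  - rewrite pw_pos by auto. apply is_derive_Reals, derivable_pt_lim_power; auto.
Qed.

Lemma pw_deriv_neg x a : x < 0 -> is_derive (fun y => pw y a) x (a * pw x (a - 1)).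
Proof.
  intros H. apply is_derive_ext_loc with (fun y => 0).
  - apply locally_interval with m_infty (Finite 0); simpl; auto.
    intros y _ Hy; rewrite pw_nonpos; lra.
  - rewrite pw_nonpos by lra. rewrite Rmult_0_r. apply is_derive_Reals, derivable_pt_lim_const.
Qed.

Lemma pw_cont_pos x a : 0 < x -> continuous (fun y => pw y a) x.
Proof.
  intros H; apply (ex_derive_continuous (K:=R_AbsRing) (V:=R_NormedModule)).
  eexists; apply pw_deriv_pos; auto.
Qed.

Lemma pw_cont_neg x a : x < 0 -> continuous (fun y => pw y a) x.
Proof.
  intros H; apply (ex_derive_continuous (K:=R_AbsRing) (V:=R_NormedModule)).
  eexists; apply pw_deriv_neg; auto.
Qed.

Lemma pw_small a eps : 0 < a -> 0 < eps ->
  exists d, 0 < d /\ forall y, Rabs y < d -> pw y a < eps.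
Proof.
  intros Ha He. exists (Rpower eps (/a)). split; [unfold Rpower; apply exp_pos|].
  intros y Hy. destruct (Rle_dec y 0); [rewrite pw_nonpos; auto|].
  rewrite pw_pos by lra. rewrite Rabs_right in Hy by lra.
  replace eps with (Rpower (Rpower eps (/a)) a).
  - apply Rlt_Rpower_l; auto; lra.
  - rewrite Rpower_mult. replace (/a * a) with 1 by (field; lra). apply Rpower_1; auto.
Qed.

Lemma pw_cont x a : 0 < a -> continuous (fun y => pw y a) x.
Proof.
  intros Ha. destruct (Rtotal_order x 0) as [H|[H|H]].
  - apply pw_cont_neg; auto.
  - subst. apply continuity_pt_filterlim, continuity_pt_locally. intros eps.
    destruct (pw_small a eps Ha (cond_pos eps)) as [d [Hd Hy]].
    exists (mkposreal d Hd). intros y Hy'.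
    rewrite pw_0, Rminus_0_r, Rabs_right by apply Rle_ge, pw_ge0.
    apply Hy. unfold ball in Hy'; simpl in Hy'.
    unfold AbsRing_ball, abs, minus, plus, opp in Hy'; simpl in Hy'.
    replace y with (y + - 0) by ring; auto.
  - apply pw_cont_pos; auto.
Qed.

Lemma pw_deriv_gt1 x a : 1 < a -> is_derive (fun y => pw y a) x (a * pw x (a - 1)).
Proof.
  intros Ha. destruct (Rtotal_order x 0) as [H|[H|H]].
  - apply pw_deriv_neg; auto.
  - subst. rewrite pw_0, Rmult_0_r. apply is_derive_Reals. intros eps He.
    destruct (pw_small (a-1) eps) as [d [Hd Hy]]; try lra.
    exists (mkposreal d Hd). intros hh Hh0 Hhd. simpl in Hhd.
    rewrite Rplus_0_l, pw_0, Rminus_0_r, Rminus_0_r.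
    destruct (Rle_dec hh 0).
    + rewrite pw_nonpos by auto. unfold Rdiv; rewrite Rmult_0_l, Rabs_R0; lra.
    + rewrite <- pw_pred_mul by lra.
      replace (pw hh (a - 1) * hh / hh) with (pw hh (a-1)) by (field; lra).
      rewrite Rabs_right by apply Rle_ge, pw_ge0. apply Hy; auto.
  - apply pw_deriv_pos; auto.
Qed.

(* Calculus on R -> R.  Coquelicot's rules are stated for general normed modules; the
   following specializations fix the types so that they apply directly to real functions. *)

(* [req] turns a goal between reals into an equation over R; [genR] abstracts every
   Riemann integral so that [field] treats them as atoms. *)
Ltac req := cbv beta; match goal with |- ?a = ?b => change (@eq R a b) end.
Ltac genR := repeat match goal with
  |- context [RInt ?f ?a ?b] => let X := fresh "I" in generalize (RInt f a b : R); intros X end.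

Lemma D_eq (f : R -> R) x l l' : is_derive f x l -> l = l' -> is_derive f x l'.
Proof. intros H ->; auto. Qed.
Lemma D_mult (f g : R -> R) x a b : is_derive f x a -> is_derive g x b ->
  is_derive (fun y => f y * g y) x (a * g x + f x * b).
Proof. intros Hf Hg. apply (is_derive_mult f g x a b Hf Hg). intros; apply Rmult_comm. Qed.
Lemma D_plus (f g : R -> R) x a b : is_derive f x a -> is_derive g x b ->
  is_derive (fun y => f y + g y) x (a + b).
Proof. intros Hf Hg. apply (is_derive_plus f g x a b Hf Hg). Qed.
Lemma D_minus (f g : R -> R) x a b : is_derive f x a -> is_derive g x b ->
  is_derive (fun y => f y - g y) x (a - b).
Proof. intros Hf Hg. apply (is_derive_minus f g x a b Hf Hg). Qed.
Lemma D_comp (f g : R -> R) x a b : is_derive f (g x) a -> is_derive g x b ->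
  is_derive (fun y => f (g y)) x (b * a).
Proof. intros Hf Hg. apply (is_derive_comp f g x a b Hf Hg). Qed.
Lemma D_id x : is_derive (fun y : R => y) x 1.
Proof. apply (is_derive_id x). Qed.
Lemma D_const (c : R) x : is_derive (fun _ => c) x 0.
Proof. apply is_derive_Reals, derivable_pt_lim_const. Qed.
Lemma D_scal (f : R -> R) k x a : is_derive f x a -> is_derive (fun y => k * f y) x (k * a).
Proof. apply is_derive_scal. Qed.
Lemma D_ext (f g : R -> R) x l : (forall y, f y = g y) -> is_derive f x l -> is_derive g x l.
Proof. apply is_derive_ext. Qed.
Lemma D_ext_loc (f g : R -> R) x l d : 0 < d -> (forall y, Rabs (y - x) < d -> f y = g y) ->
  is_derive f x l -> is_derive g x l.
Proof.
  intros Hd Hy. apply is_derive_ext_loc. exists (mkposreal d Hd). intros y Hb; apply Hy.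
  exact Hb.
Qed.

Definition cont (f : R -> R) x := continuous f x.
Lemma C_mult (f g : R -> R) x : cont f x -> cont g x -> cont (fun y => f y * g y) x.
Proof. apply (continuous_mult f g). Qed.
Lemma C_plus (f g : R -> R) x : cont f x -> cont g x -> cont (fun y => f y + g y) x.
Proof. apply (continuous_plus f g). Qed.
Lemma C_minus (f g : R -> R) x : cont f x -> cont g x -> cont (fun y => f y - g y) x.
Proof. apply (continuous_minus f g). Qed.
Lemma C_const (c : R) x : cont (fun _ => c) x.
Proof. apply continuous_const. Qed.
Lemma C_id x : cont (fun y => y) x.
Proof. apply continuous_id. Qed.
Lemma C_comp (f g : R -> R) x : cont g x -> cont f (g x) -> cont (fun y => f (g y)) x.
Proof. intros; apply (continuous_comp g f); auto. Qed.
Lemma C_ext (f g : R -> R) x : (forall y, f y = g y) -> cont f x -> cont g x.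
Proof.
  intros H Hc. apply (continuous_ext_loc g f); auto.
  apply filter_forall. intros; rewrite H; auto.
Qed.
Lemma C_derive (f : R -> R) x l : is_derive f x l -> cont f x.
Proof.
  intros H; apply (ex_derive_continuous (K:=R_AbsRing) (V:=R_NormedModule)).
  exists l; auto.
Qed.
Lemma C_pw x a : 0 < a -> cont (fun y => pw y a) x.
Proof. apply pw_cont. Qed.
Lemma C_pw_pos x a : 0 < x -> cont (fun y => pw y a) x.
Proof. apply pw_cont_pos. Qed.
Lemma cont_pt (f : R -> R) x : cont f x -> continuity_pt f x.
Proof. intros H; apply continuity_pt_filterlim; exact H. Qed.

Lemma C_pw_sub_l c x a : 0 < a -> cont (fun y => pw (c - y) a) x.
Proof.
  intros Ha. apply (C_comp (fun z => pw z a) (fun y => c - y)).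
  - apply C_minus; [apply C_const|apply C_id].
  - apply C_pw; auto.
Qed.
Lemma C_pw_sub_r c x a : 0 < a -> cont (fun y => pw (y - c) a) x.
Proof.
  intros Ha. apply (C_comp (fun z => pw z a) (fun y => y - c)).
  - apply C_minus; [apply C_id|apply C_const].
  - apply C_pw; auto.
Qed.

Lemma RInt_plusR (f g : R -> R) a b : ex_RInt f a b -> ex_RInt g a b ->
  RInt (fun x => f x + g x) a b = RInt f a b + RInt g a b.
Proof. intros; apply (RInt_plus f g); auto. Qed.
Lemma RInt_minusR (f g : R -> R) a b : ex_RInt f a b -> ex_RInt g a b ->
  RInt (fun x => f x - g x) a b = RInt f a b - RInt g a b.
Proof. intros; apply (RInt_minus f g); auto. Qed.
Lemma RInt_scalR (f : R -> R) k a b : ex_RInt f a b ->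
  RInt (fun x => k * f x) a b = k * RInt f a b.
Proof. intros; apply (RInt_scal f a b k); auto. Qed.
Lemma ex_RInt_cont (f : R -> R) a b : (forall x, cont f x) -> ex_RInt f a b.
Proof. intros H; apply (ex_RInt_continuous (V:=R_CompleteNormedModule)); intros; apply H. Qed.
Lemma ex_RInt_cont_on (f : R -> R) a b : a <= b -> (forall x, a <= x <= b -> cont f x) ->
  ex_RInt f a b.
Proof.
  intros Hab H; apply (ex_RInt_continuous (V:=R_CompleteNormedModule)); intros x Hx.
  rewrite Rmin_left, Rmax_right in Hx by lra. apply H; auto.
Qed.
Lemma RInt_ChaslesR (f : R -> R) a b c : ex_RInt f a b -> ex_RInt f b c ->
  RInt f a b + RInt f b c = RInt f a c.
Proof. intros; apply (RInt_Chasles f); auto. Qed.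
Lemma ex_RInt_scalR (f : R -> R) k a b : ex_RInt f a b -> ex_RInt (fun x => k * f x) a b.
Proof. intros H; apply (ex_RInt_scal f a b k H). Qed.
Lemma ex_RInt_plusR (f g : R -> R) a b : ex_RInt f a b -> ex_RInt g a b ->
  ex_RInt (fun x => f x + g x) a b.
Proof. intros H1 H2; apply (ex_RInt_plus f g a b H1 H2). Qed.

Lemma RInt_rescale_left (H : R -> R) s : (forall x, Rmin 0 s <= x <= Rmax 0 s -> cont H x) ->
  RInt (fun u => s * H (s * u)) 0 1 = RInt H 0 s.
Proof.
  intros HH. transitivity (RInt (fun y => scal s (H (s * y + 0))) 0 1).
  - apply RInt_ext. intros x _. rewrite Rplus_0_r. reflexivity.
  - etransitivity. apply (RInt_comp_lin (V:=R_CompleteNormedModule) H s 0 0 1).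
    + apply (ex_RInt_continuous (V:=R_CompleteNormedModule)).
      replace (s*0+0) with 0 by ring. replace (s*1+0) with s by ring. auto.
    + f_equal; ring.
Qed.

Lemma RInt_rescale_right (H : R -> R) s : (forall x, Rmin s 1 <= x <= Rmax s 1 -> cont H x) ->
  RInt (fun v => (1 - s) * H (s + (1 - s) * v)) 0 1 = RInt H s 1.
Proof.
  intros HH. transitivity (RInt (fun y => scal (1-s) (H ((1-s) * y + s))) 0 1).
  - apply RInt_ext. intros x _. rewrite Rplus_comm. reflexivity.
  - etransitivity. apply (RInt_comp_lin (V:=R_CompleteNormedModule) H (1-s) s 0 1).
    + apply (ex_RInt_continuous (V:=R_CompleteNormedModule)).
      replace ((1-s)*0+s) with s by ring. replace ((1-s)*1+s) with 1 by ring. auto.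
    + f_equal; ring.
Qed.

Lemma c2_comp (h : R -> R) (g : R -> R -> R) x y : continuity_2d_pt g x y -> cont h (g x y) ->
  continuity_2d_pt (fun u v => h (g u v)) x y.
Proof. intros; apply continuity_1d_2d_pt_comp; auto. apply cont_pt; auto. Qed.

Lemma RInt_pos (g : R -> R) a b x0 : a < x0 < b -> (forall x, a <= x <= b -> cont g x) ->
  (forall x, a < x < b -> 0 <= g x) -> 0 < g x0 -> 0 < RInt g a b.
Proof.
  intros Hx0 Hc Hp Hg0.
  assert (Hc0 := cont_pt _ _ (Hc x0 ltac:(lra))).
  destruct (proj1 (continuity_pt_locally g x0) Hc0 (mkposreal (g x0 / 2) ltac:(lra)))
    as [d Hd].
  set (e := Rmin (d/2) (Rmin ((x0 - a)/2) ((b - x0)/2))).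
  assert (He : 0 < e). { unfold e. repeat apply Rmin_pos; try lra. pose proof (cond_pos d); lra. }
  assert (He1 : e <= d/2) by apply Rmin_l.
  assert (He2 : e <= (x0-a)/2) by (eapply Rle_trans; [apply Rmin_r|apply Rmin_l]).
  assert (He3 : e <= (b-x0)/2) by (eapply Rle_trans; [apply Rmin_r|apply Rmin_r]).
  assert (Hex : forall u v, a <= u <= v -> v <= b -> ex_RInt g u v).
  { intros u v Hu Hv. apply ex_RInt_cont_on; [lra|]. intros; apply Hc; lra. }
  rewrite <- (RInt_ChaslesR g a (x0 - e) b) by (apply Hex; lra).
  rewrite <- (RInt_ChaslesR g (x0 - e) (x0 + e) b) by (apply Hex; lra).
  assert (0 <= RInt g a (x0 - e)).
  { apply RInt_ge_0. lra. apply Hex; lra. intros; apply Hp; lra. }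
  assert (0 <= RInt g (x0 + e) b).
  { apply RInt_ge_0. lra. apply Hex; lra. intros; apply Hp; lra. }
  assert (2 * e * (g x0 / 2) <= RInt g (x0 - e) (x0 + e)).
  { replace (2 * e * (g x0 / 2)) with (RInt (fun _ => g x0 / 2) (x0 - e) (x0 + e)).
    - apply RInt_le. lra. apply ex_RInt_const. apply Hex; lra.
      intros x Hx. assert (Hb : ball x0 d x).
      { unfold ball; simpl; unfold AbsRing_ball, abs, minus, plus, opp; simpl.
        apply Rabs_def1; lra. }
      specialize (Hd x Hb). simpl in Hd. apply Rabs_def2 in Hd. lra.
    - rewrite RInt_const. unfold scal; simpl; unfold mult; simpl. ring. }
  assert (0 < 2 * e * (g x0 / 2)) by (apply Rmult_lt_0_compat; lra).
  lra.
Qed.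

(* Limits as c -> 1^-.  [Integral01 k I] says exactly that c |-> int_0^c k tends to I. *)
Definition lim1 (g : R -> R) (L : R) := forall eps, 0 < eps -> exists d, 0 < d /\
  forall c, 1 - d < c < 1 -> Rabs (g c - L) < eps.

Lemma lim1_unique g L L' : lim1 g L -> lim1 g L' -> L = L'.
Proof.
  intros H1 H2. apply Rminus_diag_uniq.
  destruct (Req_dec (L - L') 0) as [E|E]; auto. exfalso.
  set (e := Rabs (L - L') / 2).
  assert (He : 0 < e) by (unfold e; apply Rdiv_lt_0_compat; [apply Rabs_pos_lt|]; lra).
  destruct (H1 e He) as [d1 [Hd1 H1']]. destruct (H2 e He) as [d2 [Hd2 H2']].
  set (c := 1 - Rmin d1 (Rmin d2 1) / 2).
  assert (Hm := Rmin_l d1 (Rmin d2 1)). assert (Hm2 := Rmin_r d1 (Rmin d2 1)).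
  assert (Hm3 := Rmin_l d2 1). assert (Hm4 := Rmin_r d2 1).
  assert (Hp : 0 < Rmin d1 (Rmin d2 1)) by (repeat apply Rmin_pos; lra).
  assert (A1 := H1' c ltac:(unfold c; lra)). assert (A2 := H2' c ltac:(unfold c; lra)).
  assert (Rabs (L - L') <= Rabs (g c - L) + Rabs (g c - L')).
  { replace (L - L') with (-(g c - L) + (g c - L')) by ring.
    eapply Rle_trans. apply Rabs_triang. rewrite Rabs_Ropp. lra. }
  unfold e in *. lra.
Qed.

Lemma lim1_ext g g' L d : 0 < d -> (forall c, 1 - d < c < 1 -> g c = g' c) ->
  lim1 g L -> lim1 g' L.
Proof.
  intros Hd He H eps Heps. destruct (H eps Heps) as [d1 [Hd1 H1]].
  exists (Rmin d d1). split; [apply Rmin_pos; auto|]. intros c Hc.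
  pose proof (Rmin_l d d1); pose proof (Rmin_r d d1). rewrite <- He by lra. apply H1; lra.
Qed.

Lemma lim1_plus g1 g2 L1 L2 : lim1 g1 L1 -> lim1 g2 L2 ->
  lim1 (fun c => g1 c + g2 c) (L1 + L2).
Proof.
  intros H1 H2 eps Heps. destruct (H1 (eps/2)) as [d1 [Hd1 A1]]; try lra.
  destruct (H2 (eps/2)) as [d2 [Hd2 A2]]; try lra.
  exists (Rmin d1 d2). split; [apply Rmin_pos; auto|].
  intros c Hc. pose proof (Rmin_l d1 d2); pose proof (Rmin_r d1 d2).
  specialize (A1 c ltac:(lra)). specialize (A2 c ltac:(lra)).
  replace (g1 c + g2 c - (L1 + L2)) with ((g1 c - L1) + (g2 c - L2)) by ring.
  eapply Rle_lt_trans. apply Rabs_triang. lra.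
Qed.

Lemma lim1_scal g L k : lim1 g L -> lim1 (fun c => k * g c) (k * L).
Proof.
  intros H eps Heps. destruct (H (eps / (Rabs k + 1))) as [d [Hd A]].
  { apply Rdiv_lt_0_compat; auto. pose proof (Rabs_pos k); lra. }
  exists d. split; auto. intros c Hc. specialize (A c Hc).
  replace (k * g c - k * L) with (k * (g c - L)) by ring. rewrite Rabs_mult.
  pose proof (Rabs_pos k). pose proof (Rabs_pos (g c - L)).
  apply Rle_lt_trans with ((Rabs k + 1) * Rabs (g c - L)). nra.
  apply Rmult_lt_reg_l with (/ (Rabs k + 1)). apply Rinv_0_lt_compat; lra.
  rewrite <- Rmult_assoc, Rinv_l by lra. lra.
Qed.

Lemma lim1_minus g1 g2 L1 L2 : lim1 g1 L1 -> lim1 g2 L2 ->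
  lim1 (fun c => g1 c - g2 c) (L1 - L2).
Proof.
  intros H1 H2. apply (lim1_ext (fun c => g1 c + (-1) * g2 c) _ _ 1); [lra|intros; ring|].
  replace (L1 - L2) with (L1 + (-1) * L2) by ring. apply lim1_plus; auto. apply lim1_scal; auto.
Qed.

Lemma lim1_cont g : cont g 1 -> lim1 g (g 1).
Proof.
  intros H eps He. apply cont_pt in H.
  destruct (proj1 (continuity_pt_locally g 1) H (mkposreal eps He)) as [d Hd].
  exists d. split; [apply cond_pos|].
  intros c Hc. apply (Hd c). unfold ball; simpl; unfold AbsRing_ball, abs, minus, plus, opp; simpl.
  apply Rabs_def1; lra.
Qed.

Lemma lim1_RInt (g : R -> R) a : a < 1 -> (forall x, a <= x <= 2 -> cont g x) ->
  lim1 (fun c => RInt g a c) (RInt g a 1).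
Proof.
  intros Ha Hg. apply (lim1_cont (fun c => RInt g a c)).
  apply (continuous_RInt_1 g a 1 (fun c => RInt g a c)).
  apply (locally_interval _ _ (Finite a) (Finite 2)); simpl; try lra.
  intros y Hy1 Hy2. apply (RInt_correct (V:=R_CompleteNormedModule)).
  apply ex_RInt_cont_on; [lra|]. intros; apply Hg; lra.
Qed.

Lemma Integral01_lim1 k I : Integral01 k I -> lim1 (fun c => RInt k 0 c) I.
Proof.
  intros H eps He. destruct (H eps He) as [d [Hd H1]]. exists d. split; auto.
  intros c Hc. destruct (H1 c Hc) as [pr Hpr]. rewrite (RInt_Reals k 0 c pr). auto.
Qed.

Lemma Integral01_RInt k I : Integral01 k I -> (forall x, 0 <= x <= 2 -> cont k x) ->
  I = RInt k 0 1.
Proof.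
  intros H Hk. apply lim1_unique with (fun c => RInt k 0 c).
  - apply Integral01_lim1; auto.
  - apply lim1_RInt; auto; lra.
Qed.

Lemma sumR_ext (f g : nat -> R) n : (forall k, (k < n)%nat -> f k = g k) -> sumR f n = sumR g n.
Proof. induction n; intros H; simpl; auto. rewrite IHn, H; auto; intros; apply H; lia. Qed.
Lemma sumR_plus (f g : nat -> R) n : sumR (fun k => f k + g k) n = sumR f n + sumR g n.
Proof. induction n; simpl; [ring|rewrite IHn; ring]. Qed.
Lemma sumR_scal (f : nat -> R) c n : sumR (fun k => c * f k) n = c * sumR f n.
Proof. induction n; simpl; [ring|rewrite IHn; ring]. Qed.
Lemma sumR_mult_r (f : nat -> R) c n : sumR f n * c = sumR (fun k => f k * c) n.
Proof. induction n; simpl; [ring|rewrite <- IHn; ring]. Qed.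
Lemma sumR_const a n : sumR (fun _ => a) n = INR n * a.
Proof. induction n; simpl sumR; [simpl; ring|rewrite IHn, S_INR; ring]. Qed.
Lemma sumR_zero n : sumR (fun _ => 0) n = 0.
Proof. rewrite sumR_const; ring. Qed.
Lemma sumR_shift (f : nat -> R) n : sumR f (S n) = f O + sumR (fun j => f (S j)) n.
Proof. induction n; simpl in *; [ring|rewrite IHn; ring]. Qed.
Lemma sumR_le (f g : nat -> R) n : (forall k, (k < n)%nat -> f k <= g k) -> sumR f n <= sumR g n.
Proof.
  induction n; intros H; simpl; [lra|].
  apply Rplus_le_compat; [apply IHn; intros; apply H; lia|apply H; lia].
Qed.
Lemma sumR_ge0 (f : nat -> R) n : (forall k, (k < n)%nat -> 0 <= f k) -> 0 <= sumR f n.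
Proof. intros H. rewrite <- (sumR_zero n). apply sumR_le; auto. Qed.
Lemma sumR_single (f : nat -> R) n k : (k < n)%nat ->
  (forall j, (j < n)%nat -> j <> k -> f j = 0) -> sumR f n = f k.
Proof.
  induction n; intros Hk H; [lia|]. simpl. destruct (Nat.eq_dec k n) as [->|Hne].
  - rewrite (sumR_ext _ (fun _ => 0)), sumR_zero; [ring|]. intros j Hj; apply H; lia.
  - rewrite IHn by (try lia; intros; apply H; lia). rewrite (H n) by lia. ring.
Qed.

Definition polyb n (q : R -> R) := exists c : nat -> R, forall x, q x = sumR (fun k => c k * x ^ k) n.

Lemma monic_sub n p p' : monic_poly n p -> monic_poly n p' -> polyb n (fun x => p x - p' x).
Proof.
  intros [c H] [c' H']. exists (fun k => c k - c' k). intros x. rewrite H, H'.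
  replace (x ^ n + sumR (fun k => c k * x ^ k) n - (x ^ n + sumR (fun k => c' k * x ^ k) n))
    with (sumR (fun k => c k * x ^ k) n + (-1) * sumR (fun k => c' k * x ^ k) n) by ring.
  rewrite <- sumR_scal, <- sumR_plus. apply sumR_ext; intros; ring.
Qed.

Lemma monic_basis_expansion (P : nat -> R -> R) : (forall k, monic_poly k (P k)) ->
  forall n q, polyb n q -> exists d : nat -> R, forall x, q x = sumR (fun k => d k * P k x) n.
Proof.
  intros HP. induction n; intros q [c Hq].
  - exists (fun _ => 0). intros x. rewrite Hq. reflexivity.
  - destruct (HP n) as [e He].
    destruct (IHn (fun x => q x - c n * P n x)) as [d' Hd'].
    { exists (fun k => c k - c n * e k). intros x. rewrite Hq, He. simpl.
      replace (sumR (fun k => c k * x ^ k) n + c n * x ^ n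
                 - c n * (x ^ n + sumR (fun k => e k * x ^ k) n))
        with (sumR (fun k => c k * x ^ k) n + (- c n) * sumR (fun k => e k * x ^ k) n) by ring.
      rewrite <- sumR_scal, <- sumR_plus. apply sumR_ext; intros; ring. }
    exists (fun k => if Nat.eqb k n then c n else d' k). intros x. simpl.
    rewrite Nat.eqb_refl. rewrite (sumR_ext _ (fun k => d' k * P k x)).
    + rewrite <- Hd'. ring.
    + intros k Hk. replace (Nat.eqb k n) with false; [reflexivity|].
      symmetry; apply Nat.eqb_neq; lia.
Qed.

Lemma D_pow k x : is_derive (fun y => y ^ k) x (INR k * x ^ pred k).
Proof. eapply D_eq. apply (is_derive_pow (fun y => y) k x 1). apply D_id. req; ring. Qed.
Lemma C_pow k x : cont (fun y => y ^ k) x.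
Proof. eapply C_derive. apply D_pow. Qed.

Lemma D_psum (c : nat -> R) n x : is_derive (fun y => sumR (fun k => c k * y ^ k) n) x
  (sumR (fun k => c k * (INR k * x ^ pred k)) n).
Proof. induction n; simpl; [apply D_const|]. apply D_plus; auto. apply D_scal. apply D_pow. Qed.
Lemma C_psum (c : nat -> R) (g : nat -> R -> R) n x : (forall k, cont (g k) x) ->
  cont (fun y => sumR (fun k => c k * g k y) n) x.
Proof.
  intros H; induction n; simpl; [apply C_const|].
  apply C_plus; auto. apply C_mult; [apply C_const|auto].
Qed.

Lemma monic_deriv n p : monic_poly n p -> exists dp, (forall x, is_derive p x (dp x)) /\
  (forall x, cont dp x) /\ polyb n (fun x => x * dp x - INR n * p x).
Proof.
  intros [c Hc].
  exists (fun x => INR n * x ^ pred n + sumR (fun k => c k * (INR k * x ^ pred k)) n).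
  split; [|split].
  - intros x. eapply D_ext. intros y; symmetry; apply Hc. apply D_plus. apply D_pow. apply D_psum.
  - intros x. apply C_plus. apply C_mult. apply C_const. apply C_pow.
    apply (C_psum c (fun k y => INR k * y ^ pred k)). intros; apply C_mult; [apply C_const|apply C_pow].
  - exists (fun k => c k * (INR k - INR n)). intros x. rewrite Hc.
    assert (Hx : forall k, x * (INR k * x ^ pred k) = INR k * x ^ k) by (intros [|k]; simpl; ring).
    rewrite !Rmult_plus_distr_l, Hx, <- !sumR_scal.
    replace (INR n * x ^ n + sumR (fun k => x * (c k * (INR k * x ^ Init.Nat.pred k))) n -
      (INR n * x ^ n + sumR (fun k => INR n * (c k * x ^ k)) n)) with
      (sumR (fun k => x * (c k * (INR k * x ^ Init.Nat.pred k))) n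
       + (-1) * sumR (fun k => INR n * (c k * x ^ k)) n) by ring.
    rewrite <- sumR_scal, <- sumR_plus. apply sumR_ext; intros k _.
    replace (x * (c k * (INR k * x ^ Init.Nat.pred k))) with (c k * (x * (INR k * x ^ pred k)))
      by ring.
    rewrite Hx. ring.
Qed.

Lemma monic_cont n p : monic_poly n p -> forall x, cont p x.
Proof. intros Hp x. destruct (monic_deriv n p Hp) as [dp [H _]]. eapply C_derive; apply H. Qed.

Lemma monic_deriv_monic n p : monic_poly (S n) p ->
  exists q, monic_poly n q /\ forall x, is_derive p x (INR (S n) * q x).
Proof.
  intros [c Hc].
  exists (fun x => x ^ n + sumR (fun j => (c (S j) * INR (S j) / INR (S n)) * x ^ j) n). split.
  - exists (fun j => c (S j) * INR (S j) / INR (S n)). auto.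
  - intros x. eapply D_eq.
    + eapply D_ext. intros y; symmetry; apply Hc. apply D_plus. apply D_pow. apply D_psum.
    + rewrite sumR_shift. simpl pred. rewrite Rmult_plus_distr_l, <- sumR_scal.
      replace (INR (S n) * x ^ n + (c 0%nat * (INR 0 * x ^ 0)
                 + sumR (fun j => c (S j) * (INR (S j) * x ^ j)) n))
        with (INR (S n) * x ^ n + sumR (fun j => c (S j) * (INR (S j) * x ^ j)) n)
        by (simpl INR; ring).
      f_equal. apply sumR_ext; intros. field. apply not_0_INR; lia.
Qed.

Lemma monic_nonzero n : forall p a b, monic_poly n p -> a < b -> exists x, a < x < b /\ p x <> 0.
Proof.
  induction n; intros p a b Hp Hab.
  - destruct Hp as [c Hc]. exists ((a+b)/2). split; [lra|]. rewrite Hc. simpl. lra.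
  - apply NNPP. intros Hno.
    assert (H : forall x, a < x < b -> p x = 0).
    { intros x Hx. apply NNPP. intros Hpx. apply Hno. exists x; auto. }
    destruct (monic_deriv_monic n p Hp) as [q [Hq Hd]].
    destruct (IHn q a b Hq Hab) as [x [Hx Hqx]]. apply Hqx.
    assert (H0 : is_derive p x 0).
    { apply D_ext_loc with (fun _ => 0) (Rmin (x - a) (b - x)); [apply Rmin_pos; lra| |apply D_const].
      intros y Hy. apply Rabs_def2 in Hy.
      pose proof (Rmin_l (x-a) (b-x)). pose proof (Rmin_r (x-a) (b-x)).
      symmetry; apply H; lra. }
    assert (E : INR (S n) * q x = 0).
    { rewrite <- (is_derive_unique _ _ _ H0). symmetry. apply is_derive_unique. exact (Hd x). }
    apply Rmult_integral in E. destruct E as [E|E]; auto.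
    exfalso; apply (not_0_INR (S n)); auto.
Qed.

Lemma RInt_sq_weight_ge0 p k a b g : monic_poly k p -> a <= b ->
  (forall x, a <= x <= b -> cont g x) -> (forall x, a < x < b -> 0 <= g x) ->
  0 <= RInt (fun x => p x * p x * g x) a b.
Proof.
  intros Hp Hab Hc Hg. apply RInt_ge_0; auto.
  - apply ex_RInt_cont_on; auto. intros x Hx.
    apply C_mult; [apply C_mult; apply (monic_cont k); auto|auto].
  - intros x Hx. apply Rmult_le_pos; [apply Rle_0_sqr|apply Hg; auto].
Qed.

Lemma RInt_sq_weight_pos p k a b g : monic_poly k p -> a < b ->
  (forall x, a <= x <= b -> cont g x) -> (forall x, a < x < b -> 0 < g x) ->
  0 < RInt (fun x => p x * p x * g x) a b.
Proof.
  intros Hp Hab Hc Hg. destruct (monic_nonzero k p a b Hp Hab) as [x0 [Hx0 Hpx0]].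
  apply RInt_pos with x0; auto.
  - intros x Hx. apply C_mult; [apply C_mult; apply (monic_cont k); auto|auto].
  - intros x Hx. apply Rmult_le_pos; [apply Rle_0_sqr|left; apply Hg; auto].
  - apply Rmult_lt_0_compat; [apply Rsqr_pos_lt; auto|apply Hg; auto].
Qed.

Lemma deriv_of_quadratic_contact (g F : R -> R) t D C d : 0 < d ->
  (forall s, Rabs (s - t) < d -> Rabs (g s - F s) <= C * (s - t)^2) ->
  is_derive F t D -> is_derive g t D.
Proof.
  intros Hd Hb HF. apply is_derive_Reals. apply is_derive_Reals in HF.
  assert (Ht : g t = F t).
  { specialize (Hb t). rewrite Rminus_diag, Rabs_R0 in Hb. simpl in Hb.
    assert (Rabs (g t - F t) <= 0)
      by (replace 0 with (C * (0 * (0 * 1))) by ring; apply Hb; lra).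
    pose proof (Rabs_pos (g t - F t)).
    apply Rminus_diag_uniq. apply Rabs_eq_0. lra. }
  intros eps He. destruct (HF (eps/2) ltac:(lra)) as [d1 Hd1].
  assert (Hcp : 0 < 2 * (Rabs C + 1)) by (pose proof (Rabs_pos C); lra).
  set (e := Rmin d1 (Rmin d (eps / (2 * (Rabs C + 1))))).
  assert (He0 : 0 < e).
  { unfold e. repeat apply Rmin_pos; try apply cond_pos; auto. apply Rdiv_lt_0_compat; lra. }
  exists (mkposreal e He0). intros hh Hh0 Hhe. simpl in Hhe.
  assert (E1 : Rabs hh < d1) by (eapply Rlt_le_trans; [apply Hhe|apply Rmin_l]).
  assert (E2 : Rabs hh < d)
    by (eapply Rlt_le_trans; [apply Hhe|]; unfold e; eapply Rle_trans; [apply Rmin_r|apply Rmin_l]).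
  assert (E3 : Rabs hh < eps / (2 * (Rabs C + 1)))
    by (eapply Rlt_le_trans; [apply Hhe|]; unfold e; eapply Rle_trans; [apply Rmin_r|apply Rmin_r]).
  specialize (Hd1 hh Hh0 E1). specialize (Hb (t + hh)).
  replace (t + hh - t) with hh in Hb by ring. specialize (Hb E2).
  replace ((g (t + hh) - g t) / hh - D)
    with (((F (t + hh) - F t) / hh - D) + (g (t+hh) - F (t+hh)) / hh) by (rewrite Ht; field; auto).
  eapply Rle_lt_trans. apply Rabs_triang.
  assert (Rabs ((g (t + hh) - F (t + hh)) / hh) <= Rabs C * Rabs hh).
  { unfold Rdiv. rewrite Rabs_mult, Rabs_inv.
    apply Rmult_le_reg_r with (Rabs hh). apply Rabs_pos_lt; auto.
    rewrite Rmult_assoc, Rinv_l by (apply Rabs_no_R0; auto). rewrite Rmult_1_r.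
    eapply Rle_trans. apply Hb.
    replace (hh^2) with (Rabs hh * Rabs hh)
      by (rewrite <- Rabs_mult; simpl; rewrite Rmult_1_r; apply Rabs_right; nra).
    assert (C <= Rabs C) by apply RRle_abs. pose proof (Rabs_pos hh). nra. }
  assert (Rabs C * Rabs hh <= eps / 2).
  { pose proof (Rabs_pos C); pose proof (Rabs_pos hh).
    apply Rle_trans with ((Rabs C + 1) * (eps / (2 * (Rabs C + 1)))). nra. right; field. lra. }
  lra.
Qed.

Lemma sq_bound_of_deriv_zero (g : R -> R) t D : is_derive g t D -> g t = 0 ->
  exists C d, 0 < d /\ forall s, Rabs (s - t) < d -> (g s)^2 <= C * (s - t)^2.
Proof.
  intros HD H0. apply is_derive_Reals in HD. destruct (HD 1 ltac:(lra)) as [d Hd].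
  exists ((Rabs D + 1)^2), d. split; [apply cond_pos|]. intros s Hs.
  destruct (Req_dec s t) as [->|Hne]; [rewrite H0, Rminus_diag; simpl; nra|].
  specialize (Hd (s - t) ltac:(lra) Hs). replace (t + (s - t)) with s in Hd by ring.
  rewrite H0, Rminus_0_r in Hd.
  assert (Hb : Rabs (g s) <= (Rabs D + 1) * Rabs (s - t)).
  { replace (g s) with (((g s / (s - t)) - D) * (s - t) + D * (s - t)) by (field; lra).
    eapply Rle_trans. apply Rabs_triang. rewrite !Rabs_mult. pose proof (Rabs_pos (s-t)). nra. }
  pose proof (Rabs_pos (g s)). pose proof (Rabs_pos (s - t)). pose proof (Rabs_pos D).
  replace ((g s)^2) with (Rabs (g s) * Rabs (g s))
    by (rewrite <- Rabs_mult; simpl; rewrite Rmult_1_r; apply Rabs_right; nra).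
  replace ((s - t)^2) with (Rabs (s-t) * Rabs (s-t))
    by (rewrite <- Rabs_mult; simpl; rewrite Rmult_1_r; apply Rabs_right; nra).
  nra.
Qed.

Lemma deriv_cont_eps (g : R -> R) t D : is_derive g t D -> forall eps, 0 < eps ->
  exists d, 0 < d /\ forall s, Rabs (s - t) < d -> Rabs (g s - g t) < eps.
Proof.
  intros HD eps He. assert (Hc := cont_pt _ _ (C_derive _ _ _ HD)).
  destruct (proj1 (continuity_pt_locally g t) Hc (mkposreal eps He)) as [d Hd].
  exists d. split; [apply cond_pos|]. intros s Hs. apply (Hd s).
  unfold ball; simpl; unfold AbsRing_ball, abs, minus, plus, opp; simpl. exact Hs.
Qed.

Lemma uniform_nbhd (Q : nat -> R -> Prop) t n :
  (forall k, (k < n)%nat -> exists d, 0 < d /\ forall s, Rabs (s - t) < d -> Q k s) ->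
  exists d, 0 < d /\ forall k, (k < n)%nat -> forall s, Rabs (s - t) < d -> Q k s.
Proof.
  induction n; intros H.
  - exists 1. split; [lra|]. intros; lia.
  - destruct IHn as [d1 [Hd1 H1]]; [intros; apply H; lia|].
    destruct (H n ltac:(lia)) as [d2 [Hd2 H2]].
    exists (Rmin d1 d2). split; [apply Rmin_pos; auto|]. intros k Hk s Hs.
    pose proof (Rmin_l d1 d2); pose proof (Rmin_r d1 d2).
    destruct (Nat.eq_dec k n) as [->|Hne]; [apply H2; lra|apply H1; lia || lra].
Qed.

Lemma uniform_bound_nbhd (Q : nat -> R -> R -> Prop) t n :
  (forall k C C' s, C <= C' -> Q k C s -> Q k C' s) ->
  (forall k, (k < n)%nat -> exists C d, 0 < d /\ forall s, Rabs (s - t) < d -> Q k C s) ->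
  exists C d, 0 < d /\ forall k, (k < n)%nat -> forall s, Rabs (s - t) < d -> Q k C s.
Proof.
  intros Hm. induction n; intros H.
  - exists 0, 1. split; [lra|]. intros; lia.
  - destruct IHn as [C1 [d1 [Hd1 H1]]]; [intros; apply H; lia|].
    destruct (H n ltac:(lia)) as [C2 [d2 [Hd2 H2]]].
    exists (Rmax C1 C2), (Rmin d1 d2). split; [apply Rmin_pos; auto|]. intros k Hk s Hs.
    pose proof (Rmin_l d1 d2); pose proof (Rmin_r d1 d2).
    destruct (Nat.eq_dec k n) as [->|Hne].
    + apply Hm with C2; [apply Rmax_r|apply H2; lra].
    + apply Hm with C1; [apply Rmax_l|apply H1; lia || lra].
Qed.

Lemma finite_min_pos (a : nat -> R) n : (forall k, (k < n)%nat -> 0 < a k) ->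
  exists l, 0 < l /\ forall k, (k < n)%nat -> l <= a k.
Proof.
  induction n; intros H.
  - exists 1. split; [lra|]. intros; lia.
  - destruct IHn as [l [Hl H1]]; [intros; apply H; lia|].
    exists (Rmin l (a n)). split; [apply Rmin_pos; [auto|apply H; lia]|]. intros k Hk.
    destruct (Nat.eq_dec k n) as [->|Hne]; [apply Rmin_r|].
    eapply Rle_trans; [apply Rmin_l|apply H1; lia].
Qed.

(* A quadratic form whose entries are bounded by eps is bounded below by
   -eps n |c|^2 (using 2|c_k c_l| <= c_k^2 + c_l^2). *)
Lemma quad_form_perturbation (c : nat -> R) (e : nat -> nat -> R) eps n : 0 <= eps ->
  (forall k l, (k < n)%nat -> (l < n)%nat -> Rabs (e k l) <= eps) ->
  - (eps * INR n * sumR (fun k => c k ^ 2) n)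
    <= sumR (fun k => c k * sumR (fun l => c l * e k l) n) n.
Proof.
  intros He H.
  assert (E : sumR (fun k => sumR (fun l => - eps * ((c k ^2 + c l ^2) / 2)) n) n
              = - (eps * INR n * sumR (fun k => c k ^ 2) n)).
  { rewrite (sumR_ext _ (fun k => (-eps / 2 * INR n) * c k ^ 2
                                  + (- eps / 2) * sumR (fun l => c l ^ 2) n)).
    - rewrite sumR_plus, sumR_scal, sumR_const. field.
    - intros k _. rewrite (sumR_ext _ (fun l => (- eps / 2 * c k ^ 2) + (- eps / 2) * c l ^ 2)).
      + rewrite sumR_plus, sumR_const, sumR_scal. field.
      + intros; field. }
  rewrite <- E. apply sumR_le. intros k Hk. rewrite <- sumR_scal. apply sumR_le. intros l Hl.
  specialize (H k l Hk Hl).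
  pose proof (Rle_abs (e k l)) as Ha1; pose proof (Rle_abs (- e k l)) as Ha2.
  rewrite Rabs_Ropp in Ha2.
  assert (0 <= (c k - c l)^2) by apply pow2_ge_0. assert (0 <= (c k + c l)^2) by apply pow2_ge_0.
  assert (c k * (c l * e k l) = (c k * c l) * e k l) by ring.
  destruct (Rle_dec 0 (c k * c l)).
  - assert (0 <= (c k * c l) * (e k l + eps)) by (apply Rmult_le_pos; lra).
    assert (0 <= eps * ((c k ^2 + c l ^2)/2 - c k * c l)) by (apply Rmult_le_pos; nra).
    nra.
  - assert (0 <= (- (c k * c l)) * (eps - e k l)) by (apply Rmult_le_pos; lra).
    assert (0 <= eps * ((c k ^2 + c l ^2)/2 + c k * c l)) by (apply Rmult_le_pos; nra).
    nra.
Qed.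

Lemma quad_form_coercive (c : nat -> R) (M M0 : nat -> nat -> R) lam eps n :
  0 <= eps -> eps * INR n <= lam ->
  (forall k, (k < n)%nat -> 2 * lam <= M0 k k) ->
  (forall k l, (k < n)%nat -> (l < n)%nat -> k <> l -> M0 k l = 0) ->
  (forall k l, (k < n)%nat -> (l < n)%nat -> Rabs (M k l - M0 k l) <= eps) ->
  lam * sumR (fun k => c k ^ 2) n <= sumR (fun k => c k * sumR (fun l => c l * M k l) n) n.
Proof.
  intros He Hen Hdiag Hoff Hpert.
  set (S := sumR (fun k => c k ^ 2) n).
  assert (HS : 0 <= S) by (apply sumR_ge0; intros; apply pow2_ge_0).
  assert (Hsplit : sumR (fun k => c k * sumR (fun l => c l * M k l) n) n
         = sumR (fun k => c k * sumR (fun l => c l * M0 k l) n) n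
         + sumR (fun k => c k * sumR (fun l => c l * (M k l - M0 k l)) n) n).
  { rewrite <- sumR_plus. apply sumR_ext. intros k _.
    rewrite <- Rmult_plus_distr_l, <- sumR_plus. f_equal. apply sumR_ext; intros; ring. }
  assert (Hdiag_sum : 2 * lam * S <= sumR (fun k => c k * sumR (fun l => c l * M0 k l) n) n).
  { unfold S. rewrite <- sumR_scal. apply sumR_le. intros k Hk.
    rewrite (sumR_single _ n k Hk) by (intros l Hl Hlk; rewrite Hoff; auto; ring).
    specialize (Hdiag k Hk). pose proof (pow2_ge_0 (c k)). simpl. nra. }
  assert (Hp := quad_form_perturbation c (fun k l => M k l - M0 k l) eps n He Hpert).
  fold S in Hp. assert (eps * INR n * S <= lam * S) by nra.
  rewrite Hsplit. lra.
Qed.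

(* If lam |c|^2 <= X = - sum_k c_k m_k then X <= |m|^2 / lam (Cauchy-Schwarz). *)
Lemma quad_form_upper (c m : nat -> R) lam X n : 0 < lam ->
  lam * sumR (fun k => c k ^ 2) n <= X -> X = - sumR (fun k => c k * m k) n ->
  X <= sumR (fun k => m k ^ 2) n / lam.
Proof.
  intros Hlam HX HXe.
  assert (Hhalf : X <= lam / 2 * sumR (fun k => c k ^ 2) n + sumR (fun k => m k ^ 2) n / (2 * lam)).
  { rewrite HXe. unfold Rdiv at 2. rewrite sumR_mult_r, <- sumR_scal, <- sumR_plus.
    replace (- sumR (fun k => c k * m k) n) with (-1 * sumR (fun k => c k * m k) n) by ring.
    rewrite <- sumR_scal. apply sumR_le. intros k _.
    assert (0 <= (lam * c k + m k)^2 / (2 * lam)).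
    { apply Rmult_le_pos. apply pow2_ge_0. left; apply Rinv_0_lt_compat; lra. }
    assert (lam / 2 * c k ^ 2 + m k ^ 2 * / (2 * lam) - -1 * (c k * m k)
            = (lam * c k + m k)^2 / (2 * lam)) by (field; lra).
    lra. }
  assert (sumR (fun k => m k ^ 2) n / (2 * lam) = sumR (fun k => m k ^ 2) n / lam / 2)
    by (field; lra).
  lra.
Qed.

Section Weight.
Variables al be ga A B : R.
Hypothesis Hal : 0 < al.
Hypothesis Hbe : 0 < be.
Hypothesis Hga : 0 < ga.

Definition W s x := weight al be ga A B s x.

Lemma W_eq s x : W s x = pw x al * pw (1-x) be * (A * pw (s-x) ga + (A+B) * pw (x-s) ga).
Proof.
  unfold W, weight, theta. destruct (Rtotal_order x s) as [H|[H|H]].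
  - rewrite (pw_nonpos (x-s)) by lra. destruct (Rlt_dec 0 (x-s)); [lra|].
    rewrite Rabs_left by lra. replace (-(x-s)) with (s-x) by ring. ring.
  - subst. replace (s-s) with 0 by ring. rewrite Rabs_R0, !pw_0. ring.
  - rewrite (pw_nonpos (s-x)) by lra. destruct (Rlt_dec 0 (x-s)); [|lra].
    rewrite Rabs_right by lra. ring.
Qed.

Lemma W_cont s x : cont (W s) x.
Proof.
  apply C_ext with (fun x => pw x al * pw (1-x) be * (A * pw (s-x) ga + (A+B) * pw (x-s) ga)).
  - intros; rewrite W_eq; auto.
  - apply C_mult; [apply C_mult; [apply C_pw; auto|apply C_pw_sub_l; auto]|].
    apply C_plus; apply C_mult; try apply C_const; [apply C_pw_sub_l|apply C_pw_sub_r]; auto.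
Qed.

Definition J (f : R -> R) s := RInt (fun x => f x * W s x) 0 1.

(* The s-independent factors of the left and right parts of f w. *)
Definition FL (f : R -> R) x := A * f x * pw x al * pw (1-x) be.
Definition FU (f : R -> R) x := (A+B) * f x * pw x al * pw (1-x) be.

Lemma fW_cont f s x : (forall y, cont f y) -> cont (fun x => f x * W s x) x.
Proof. intros Hf; apply C_mult; auto; apply W_cont. Qed.

Lemma FL_cont f x : (forall y, cont f y) -> cont (FL f) x.
Proof.
  intros Hf. unfold FL. apply C_mult; [|apply C_pw_sub_l; auto].
  apply C_mult; [apply C_mult; [apply C_const|auto]|apply C_pw; auto].
Qed.
Lemma FU_cont f x : (forall y, cont f y) -> cont (FU f) x.
Proof.
  intros Hf. unfold FU. apply C_mult; [|apply C_pw_sub_l; auto].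
  apply C_mult; [apply C_mult; [apply C_const|auto]|apply C_pw; auto].
Qed.

Lemma J_split f s : (forall y, cont f y) -> 0 < s < 1 ->
  J f s = RInt (fun x => FL f x * pw (s-x) ga) 0 s + RInt (fun x => FU f x * pw (x-s) ga) s 1.
Proof.
  intros Hf Hs. unfold J.
  rewrite <- (RInt_ChaslesR _ 0 s 1) by (apply ex_RInt_cont; intros; apply fW_cont; auto).
  f_equal; apply RInt_ext; intros x Hx; rewrite Rmin_left, Rmax_right in Hx by lra;
    rewrite W_eq; unfold FL, FU.
  - rewrite (pw_nonpos (x-s)) by lra. req; ring.
  - rewrite (pw_nonpos (s-x)) by lra. req; ring.
Qed.

Definition dFL f (df : R -> R) x := A * (df x * pw x al * pw (1-x) be
  + f x * (al * pw x (al-1)) * pw (1-x) be + f x * pw x al * (-1 * (be * pw (1-x) (be-1)))).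
Definition dFU f (df : R -> R) x := (A+B) * (df x * pw x al * pw (1-x) be
  + f x * (al * pw x (al-1)) * pw (1-x) be + f x * pw x al * (-1 * (be * pw (1-x) (be-1)))).

Lemma FL_deriv f df x : (forall y, is_derive f y (df y)) -> 0 < x < 1 ->
  is_derive (FL f) x (dFL f df x).
Proof.
  intros Hf Hx. unfold FL, dFL. eapply D_eq.
  - apply D_mult. apply D_mult. apply D_scal. apply Hf. apply pw_deriv_pos; lra.
    apply (D_comp (fun z => pw z be) (fun y => 1 - y)). apply pw_deriv_pos; lra.
    apply D_minus; [apply D_const|apply D_id].
  - req; ring.
Qed.
Lemma FU_deriv f df x : (forall y, is_derive f y (df y)) -> 0 < x < 1 ->
  is_derive (FU f) x (dFU f df x).
Proof.
  intros Hf Hx. unfold FU, dFU. eapply D_eq.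
  - apply D_mult. apply D_mult. apply D_scal. apply Hf. apply pw_deriv_pos; lra.
    apply (D_comp (fun z => pw z be) (fun y => 1 - y)). apply pw_deriv_pos; lra.
    apply D_minus; [apply D_const|apply D_id].
  - req; ring.
Qed.

(* x (FL f)'(x) and (1-x) (FU f)'(x), written without the singular factors x^(al-1),
   (1-x)^(be-1) that become harmless after multiplication. *)
Definition PsiL f (df : R -> R) x :=
  A * pw x al * ((x * df x + al * f x) * pw (1-x) be - be * x * f x * pw (1-x) (be-1)).
Definition ThU f (df : R -> R) x :=
  (A+B) * pw (1-x) be * ((1-x) * df x * pw x al + al * (1-x) * f x * pw x (al-1) - be * f x * pw x al).

Lemma PsiL_eq f df x : 0 < x < 1 -> x * dFL f df x = PsiL f df x.
Proof. intros Hx. unfold dFL, PsiL. rewrite (pw_pred x al), (pw_pred (1-x) be) by lra. field. lra. Qed.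
Lemma ThU_eq f df x : 0 < x < 1 -> (1-x) * dFU f df x = ThU f df x.
Proof. intros Hx. unfold dFU, ThU. rewrite (pw_pred x al), (pw_pred (1-x) be) by lra. field. lra. Qed.

Lemma PsiL_cont f df x : (forall y, cont f y) -> (forall y, cont df y) -> x < 1 ->
  cont (PsiL f df) x.
Proof.
  intros Hf Hd Hx. unfold PsiL. apply C_mult; [apply C_mult; [apply C_const|apply C_pw; auto]|].
  apply C_minus.
  - apply C_mult; [|apply C_pw_sub_l; auto].
    apply C_plus; apply C_mult; auto; apply C_id || apply C_const.
  - apply C_mult; [apply C_mult; [apply C_mult; [apply C_const|apply C_id]|auto]|].
    apply (C_comp (fun z => pw z (be-1)) (fun y => 1 - y)).
    + apply C_minus; [apply C_const|apply C_id].
    + apply C_pw_pos; lra.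
Qed.

Lemma ThU_cont f df x : (forall y, cont f y) -> (forall y, cont df y) -> 0 < x ->
  cont (ThU f df) x.
Proof.
  intros Hf Hd Hx. unfold ThU. apply C_mult; [apply C_mult; [apply C_const|apply C_pw_sub_l; auto]|].
  assert (H1 : cont (fun y => 1 - y) x) by (apply C_minus; [apply C_const|apply C_id]).
  apply C_minus; [apply C_plus|].
  - apply C_mult; [apply C_mult; auto|apply C_pw; auto].
  - apply C_mult; [apply C_mult; [apply C_mult; [apply C_const|auto]|auto]|apply C_pw_pos; auto].
  - apply C_mult; [apply C_mult; [apply C_const|auto]|apply C_pw; auto].
Qed.

(* The integrands of the s-derivatives of the left and right parts of J f s
   (times s and 1-s respectively). *)
Definition GL f df s x := pw (s - x) ga * ((1+ga) * FL f x + PsiL f df x).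
Definition GU f df s x := pw (x - s) ga * (ThU f df x - (1+ga) * FU f x).

Lemma GL_cont f df s x : (forall y, cont f y) -> (forall y, cont df y) -> x < 1 ->
  cont (GL f df s) x.
Proof.
  intros Hf Hd Hx. unfold GL. apply C_mult; [apply C_pw_sub_l; auto|].
  apply C_plus; [apply C_mult; [apply C_const|apply FL_cont; auto]|apply PsiL_cont; auto].
Qed.

Lemma GU_cont f df s x : (forall y, cont f y) -> (forall y, cont df y) -> 0 < x ->
  cont (GU f df s) x.
Proof.
  intros Hf Hd Hx. unfold GU. apply C_mult; [apply C_pw_sub_r; auto|].
  apply C_minus; [apply ThU_cont; auto|apply C_mult; [apply C_const|apply FU_cont; auto]].
Qed.

(* Left part: after the substitution x = s u,
     int_0^s FL f x (s-x)^ga dx = int_0^1 qL f s u du. *)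
Definition qL f s u := s * (FL f (s*u) * pw (s - s*u) ga).

Lemma qL_deriv f df s u : (forall y, is_derive f y (df y)) -> 0 < s < 1 ->
  is_derive (fun z => qL f z u) s (GL f df s (s*u)).
Proof.
  intros Hf Hs. unfold qL, GL.
  destruct (Rtotal_order u 0) as [Hu|[Hu|Hu]].
  - eapply D_eq. apply D_ext_loc with (fun _ => 0) s. lra.
    + intros y Hy. apply Rabs_def2 in Hy. unfold FL. rewrite (pw_nonpos (y*u)) by nra. req; ring.
    + apply D_const.
    + unfold FL, PsiL. rewrite (pw_nonpos (s*u)) by nra. req; ring.
  - subst. eapply D_eq. apply D_ext with (fun _ => 0).
    + intros y. unfold FL. rewrite Rmult_0_r, pw_0. req; ring.
    + apply D_const.
    + unfold FL, PsiL. rewrite Rmult_0_r, pw_0. req; ring.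
  - destruct (Rtotal_order u 1) as [Hu1|[Hu1|Hu1]].
    + eapply D_eq.
      * apply D_mult. apply D_id. apply D_mult.
        -- apply (D_comp (FL f) (fun z => z * u)). apply FL_deriv; auto. nra.
           eapply D_eq. apply D_mult. apply D_id. apply D_const. reflexivity.
        -- apply (D_comp (fun z => pw z ga) (fun z => z - z * u)). apply pw_deriv_pos. nra.
           apply D_minus. apply D_id. eapply D_eq. apply D_mult. apply D_id. apply D_const. reflexivity.
      * req. rewrite <- PsiL_eq by nra. rewrite (pw_pred (s - s*u) ga) by nra. field. nra.
    + subst. eapply D_eq. apply D_ext with (fun _ => 0).
      * intros y. rewrite Rmult_1_r, Rminus_diag, pw_0. req; ring.
      * apply D_const.
      * rewrite Rmult_1_r, Rminus_diag, pw_0. req; ring.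
    + eapply D_eq. apply D_ext_loc with (fun _ => 0) s. lra.
      * intros y Hy. apply Rabs_def2 in Hy. rewrite (pw_nonpos (y - y*u)) by nra. req; ring.
      * apply D_const.
      * rewrite (pw_nonpos (s - s*u)) by nra. req; ring.
Qed.

Lemma qL_deriv_cont2 f df s t : (forall y, cont f y) -> (forall y, cont df y) ->
  0 < s < 1 -> 0 <= t <= 1 -> continuity_2d_pt (fun u v => GL f df u (u*v)) s t.
Proof.
  intros Hf Hd Hs Ht. unfold GL.
  assert (Hm : continuity_2d_pt (fun u v => u * v) s t).
  { apply continuity_2d_pt_mult; [apply continuity_2d_pt_id1|apply continuity_2d_pt_id2]. }
  apply continuity_2d_pt_mult.
  - apply (c2_comp (fun z => pw z ga) (fun u v => u - u * v)); [|apply C_pw; auto].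
    apply continuity_2d_pt_minus; [apply continuity_2d_pt_id1|auto].
  - apply continuity_2d_pt_plus.
    + apply continuity_2d_pt_mult; [apply continuity_2d_pt_const|].
      apply (c2_comp (FL f) (fun u v => u * v)); auto. apply FL_cont; auto.
    + apply (c2_comp (PsiL f df) (fun u v => u * v)); auto. apply PsiL_cont; auto. nra.
Qed.

Lemma qL_cont f s u : (forall y, cont f y) -> cont (qL f s) u.
Proof.
  intros Hf. unfold qL. apply C_mult; [apply C_const|apply C_mult].
  - apply (C_comp (FL f) (fun u => s * u)); [apply C_mult; [apply C_const|apply C_id]|].
    apply FL_cont; auto.
  - apply (C_comp (fun z => pw z ga) (fun u => s - s * u)); [|apply C_pw; auto].
    apply C_minus; [apply C_const|apply C_mult; [apply C_const|apply C_id]].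
Qed.

Lemma L_deriv f df s0 : (forall y, is_derive f y (df y)) -> (forall y, cont df y) -> 0 < s0 < 1 ->
  is_derive (fun s => RInt (fun x => FL f x * pw (s-x) ga) 0 s) s0 (RInt (GL f df s0) 0 s0 / s0).
Proof.
  intros Hf Hd Hs.
  assert (Hfc : forall y, cont f y) by (intros y; eapply C_derive; apply Hf).
  apply D_ext with (fun s => RInt (qL f s) 0 1).
  { intros s. unfold qL. rewrite <- (RInt_rescale_left (fun x => FL f x * pw (s - x) ga)).
    - apply RInt_ext; intros; reflexivity.
    - intros x _; apply C_mult; [apply FL_cont; auto|apply C_pw_sub_l; auto]. }
  replace (RInt (GL f df s0) 0 s0 / s0) with (RInt (fun t => Derive (fun u => qL f u t) s0) 0 1).
  apply (is_derive_RInt_param (fun u t => qL f u t) 0 1 s0).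
  - apply (locally_interval _ _ (Finite 0) (Finite 1)); simpl; try lra.
    intros y Hy0 Hy1 t _. eexists. apply (qL_deriv f df); auto.
  - intros t Ht. rewrite Rmin_left, Rmax_right in Ht by lra.
    apply continuity_2d_pt_ext_loc with (fun u v => GL f df u (u*v)).
    + exists (mkposreal (Rmin s0 (1 - s0)) ltac:(apply Rmin_pos; lra)). simpl. intros u v Hu _.
      apply Rabs_def2 in Hu. pose proof (Rmin_l s0 (1-s0)); pose proof (Rmin_r s0 (1-s0)).
      symmetry; apply is_derive_unique. apply qL_deriv; auto; lra.
    + apply qL_deriv_cont2; auto.
  - apply filter_forall. intros y. apply ex_RInt_cont. intros; apply qL_cont; auto.
  - assert (HG : forall x, 0 <= x <= s0 -> cont (GL f df s0) x)
      by (intros; apply GL_cont; auto; lra).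
    transitivity (RInt (fun u => GL f df s0 (s0 * u)) 0 1).
    { apply RInt_ext. intros x _. apply is_derive_unique. apply qL_deriv; auto. }
    apply Rmult_eq_reg_l with s0; [|lra].
    rewrite <- RInt_scalR.
    + rewrite RInt_rescale_left; [req; genR; field; lra|].
      intros x Hx. rewrite Rmin_left, Rmax_right in Hx by lra. apply HG; auto.
    + apply ex_RInt_cont_on; [lra|]. intros x Hx.
      apply (C_comp (GL f df s0) (fun u => s0 * u)); [apply C_mult; [apply C_const|apply C_id]|].
      apply GL_cont; auto. nra.
Qed.

(* Right part: after the substitution x = s + (1-s) v,
     int_s^1 FU f x (x-s)^ga dx = int_0^1 qU f s v dv. *)
Definition qU f s v := (1-s) * (FU f (s + (1-s)*v) * pw ((s + (1-s)*v) - s) ga).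

Lemma qU_deriv f df s v : (forall y, is_derive f y (df y)) -> 0 < s < 1 ->
  is_derive (fun z => qU f z v) s (GU f df s (s + (1-s)*v)).
Proof.
  intros Hf Hs. unfold qU, GU.
  destruct (Rtotal_order v 0) as [Hv|[Hv|Hv]].
  - eapply D_eq. apply D_ext_loc with (fun _ => 0) (1-s). lra.
    + intros y Hy. apply Rabs_def2 in Hy. rewrite (pw_nonpos (y + (1-y)*v - y)) by nra. req; ring.
    + apply D_const.
    + rewrite (pw_nonpos (s + (1-s)*v - s)) by nra. req; ring.
  - subst. eapply D_eq. apply D_ext with (fun _ => 0).
    + intros y. replace (y + (1-y)*0 - y) with 0 by ring. rewrite pw_0. req; ring.
    + apply D_const.
    + replace (s + (1-s)*0 - s) with 0 by ring. rewrite pw_0. req; ring.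
  - destruct (Rtotal_order v 1) as [Hv1|[Hv1|Hv1]].
    + eapply D_eq.
      * apply D_mult. apply D_minus. apply D_const. apply D_id. apply D_mult.
        -- apply (D_comp (FU f) (fun z => z + (1-z) * v)). apply FU_deriv; auto. nra.
           apply D_plus. apply D_id. apply D_mult. apply D_minus. apply D_const. apply D_id.
           apply D_const.
        -- apply (D_comp (fun z => pw z ga) (fun z => z + (1-z) * v - z)). apply pw_deriv_pos. nra.
           apply D_minus; [|apply D_id]. apply D_plus. apply D_id.
           apply D_mult. apply D_minus. apply D_const. apply D_id. apply D_const.
      * req. rewrite <- ThU_eq by nra. rewrite (pw_pred (s + (1-s)*v - s) ga) by nra. field. nra.
    + subst. eapply D_eq. apply D_ext with (fun _ => 0).
      * intros y. unfold FU. replace (1 - (y + (1-y)*1)) with 0 by ring. rewrite pw_0. req; ring.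
      * apply D_const.
      * unfold FU, ThU. replace (1 - (s + (1-s)*1)) with 0 by ring. rewrite pw_0. req; ring.
    + eapply D_eq. apply D_ext_loc with (fun _ => 0) (1-s). lra.
      * intros y Hy. apply Rabs_def2 in Hy. unfold FU.
        rewrite (pw_nonpos (1 - (y + (1-y)*v))) by nra. req; ring.
      * apply D_const.
      * unfold FU, ThU. rewrite (pw_nonpos (1 - (s + (1-s)*v))) by nra. req; ring.
Qed.

Lemma qU_deriv_cont2 f df s t : (forall y, cont f y) -> (forall y, cont df y) ->
  0 < s < 1 -> 0 <= t <= 1 -> continuity_2d_pt (fun u v => GU f df u (u + (1-u)*v)) s t.
Proof.
  intros Hf Hd Hs Ht. unfold GU.
  assert (Hg : continuity_2d_pt (fun u v => u + (1 - u) * v) s t).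
  { apply continuity_2d_pt_plus; [apply continuity_2d_pt_id1|apply continuity_2d_pt_mult].
    - apply continuity_2d_pt_minus; [apply continuity_2d_pt_const|apply continuity_2d_pt_id1].
    - apply continuity_2d_pt_id2. }
  apply continuity_2d_pt_mult.
  - apply (c2_comp (fun z => pw z ga) (fun u v => u + (1 - u) * v - u)); [|apply C_pw; auto].
    apply continuity_2d_pt_minus; [auto|apply continuity_2d_pt_id1].
  - apply continuity_2d_pt_minus.
    + apply (c2_comp (ThU f df) (fun u v => u + (1 - u) * v)); auto. apply ThU_cont; auto. nra.
    + apply continuity_2d_pt_mult; [apply continuity_2d_pt_const|].
      apply (c2_comp (FU f) (fun u v => u + (1 - u) * v)); auto. apply FU_cont; auto.
Qed.

Lemma qU_cont f s u : (forall y, cont f y) -> cont (qU f s) u.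
Proof.
  intros Hf. unfold qU.
  assert (Ha : cont (fun u => s + (1 - s) * u) u)
    by (apply C_plus; [apply C_const|apply C_mult; [apply C_const|apply C_id]]).
  apply C_mult; [apply C_const|apply C_mult].
  - apply (C_comp (FU f) (fun u => s + (1 - s) * u)); auto. apply FU_cont; auto.
  - apply (C_comp (fun z => pw z ga) (fun u => s + (1-s) * u - s)); [|apply C_pw; auto].
    apply C_minus; [auto|apply C_const].
Qed.

Lemma U_deriv f df s0 : (forall y, is_derive f y (df y)) -> (forall y, cont df y) -> 0 < s0 < 1 ->
  is_derive (fun s => RInt (fun x => FU f x * pw (x-s) ga) s 1) s0
    (RInt (GU f df s0) s0 1 / (1 - s0)).
Proof.
  intros Hf Hd Hs.
  assert (Hfc : forall y, cont f y) by (intros y; eapply C_derive; apply Hf).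
  apply D_ext with (fun s => RInt (qU f s) 0 1).
  { intros s. unfold qU. rewrite <- (RInt_rescale_right (fun x => FU f x * pw (x - s) ga)).
    - apply RInt_ext; intros; reflexivity.
    - intros x _; apply C_mult; [apply FU_cont; auto|apply C_pw_sub_r; auto]. }
  replace (RInt (GU f df s0) s0 1 / (1 - s0))
    with (RInt (fun t => Derive (fun u => qU f u t) s0) 0 1).
  apply (is_derive_RInt_param (fun u t => qU f u t) 0 1 s0).
  - apply (locally_interval _ _ (Finite 0) (Finite 1)); simpl; try lra.
    intros y Hy0 Hy1 t _. eexists. apply (qU_deriv f df); auto.
  - intros t Ht. rewrite Rmin_left, Rmax_right in Ht by lra.
    apply continuity_2d_pt_ext_loc with (fun u v => GU f df u (u + (1-u)*v)).
    + exists (mkposreal (Rmin s0 (1 - s0)) ltac:(apply Rmin_pos; lra)). simpl. intros u v Hu _.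
      apply Rabs_def2 in Hu. pose proof (Rmin_l s0 (1-s0)); pose proof (Rmin_r s0 (1-s0)).
      symmetry; apply is_derive_unique. apply qU_deriv; auto; lra.
    + apply qU_deriv_cont2; auto.
  - apply filter_forall. intros y. apply ex_RInt_cont. intros; apply qU_cont; auto.
  - transitivity (RInt (fun v => GU f df s0 (s0 + (1-s0) * v)) 0 1).
    { apply RInt_ext. intros x _. apply is_derive_unique. apply qU_deriv; auto. }
    apply Rmult_eq_reg_l with (1 - s0); [|lra].
    rewrite <- RInt_scalR.
    + rewrite RInt_rescale_right; [req; genR; field; lra|].
      intros x Hx. rewrite Rmin_left, Rmax_right in Hx by lra. apply GU_cont; auto; lra.
    + apply ex_RInt_cont_on; [lra|]. intros x Hx.
      apply (C_comp (GU f df s0) (fun v => s0 + (1-s0) * v)).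
      * apply C_plus; [apply C_const|apply C_mult; [apply C_const|apply C_id]].
      * apply GU_cont; auto. nra.
Qed.

Definition DJ f df s := RInt (GL f df s) 0 s / s + RInt (GU f df s) s 1 / (1 - s).

Lemma J_deriv f df s : (forall y, is_derive f y (df y)) -> (forall y, cont df y) -> 0 < s < 1 ->
  is_derive (J f) s (DJ f df s).
Proof.
  intros Hf Hd Hs. assert (Hfc : forall y, cont f y) by (intros y; eapply C_derive; apply Hf).
  apply D_ext_loc with (fun y => RInt (fun x => FL f x * pw (y-x) ga) 0 y
                              + RInt (fun x => FU f x * pw (x-y) ga) y 1) (Rmin s (1-s)).
  - apply Rmin_pos; lra.
  - intros y Hy. pose proof (Rmin_l s (1-s)). pose proof (Rmin_r s (1-s)).
    apply Rabs_def2 in Hy. symmetry; apply J_split; auto; lra.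
  - apply D_plus; [apply L_deriv|apply U_deriv]; auto.
Qed.

(* The integrand of the Euler identity.  Left of s it is GL; right of s it is GU up to the
   exact derivative of the boundary term ZZ (integration by parts). *)
Definition EE f df s x :=
  (al+be+ga) * (f x * W s x) + (f x + x * df x) * W s x - be * (f x * W s x / (1 - x)).
Definition ZZ f s x := FU f x * pw (x - s) (ga + 1).
Definition dZ f df s x := dFU f df x * pw (x - s) (ga+1) + FU f x * ((ga+1) * pw (x - s) ga).

Lemma EE_left f df s x : 0 < x < s -> s < 1 -> EE f df s x = GL f df s x.
Proof.
  intros Hx Hs. unfold EE, GL. rewrite W_eq, (pw_nonpos (x-s)) by lra. unfold FL, PsiL.
  rewrite (pw_pred (1-x) be) by lra. field. lra.
Qed.

Lemma EE_right f df s x : 0 < s < x -> x < 1 ->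
  (1 - s) * EE f df s x = s * GU f df s x + dZ f df s x.
Proof.
  intros Hx Hs. unfold EE, GU, dZ. rewrite W_eq, (pw_nonpos (s-x)) by lra. unfold FU, ThU, dFU.
  rewrite (pw_pred (1-x) be), (pw_pred x al), (pw_succ (x-s) ga) by lra. field. lra.
Qed.

Lemma ZZ_deriv f df s x : (forall y, is_derive f y (df y)) -> 0 < x < 1 ->
  is_derive (ZZ f s) x (dZ f df s x).
Proof.
  intros Hf Hx. unfold ZZ, dZ. eapply D_eq.
  - apply D_mult. apply FU_deriv; auto.
    apply (D_comp (fun z => pw z (ga+1)) (fun y => y - s)). apply pw_deriv_gt1. lra.
    apply D_minus; [apply D_id|apply D_const].
  - replace (ga + 1 - 1) with ga by ring. req; ring.
Qed.

Lemma dZ_cont f df s x : (forall y, cont f y) -> (forall y, cont df y) -> 0 < x < 1 ->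
  cont (dZ f df s) x.
Proof.
  intros Hf Hd Hx. unfold dZ, dFU.
  assert (H1 : cont (fun y => pw (1 - y) be) x) by (apply C_pw_sub_l; auto).
  assert (H2 : cont (fun y => pw (1 - y) (be-1)) x).
  { apply (C_comp (fun z => pw z (be-1)) (fun y => 1 - y)).
    apply C_minus; [apply C_const|apply C_id]. apply C_pw_pos; lra. }
  apply C_plus; apply C_mult.
  - apply C_mult; [apply C_const|]. apply C_plus; [apply C_plus|].
    + apply C_mult; [apply C_mult; [auto|apply C_pw; auto]|exact H1].
    + apply C_mult; [apply C_mult; [auto|apply C_mult; [apply C_const|apply C_pw_pos; lra]]|exact H1].
    + apply C_mult; [apply C_mult; [auto|apply C_pw; auto]|].
      apply C_mult; [apply C_const|apply C_mult; [apply C_const|exact H2]].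
  - apply C_pw_sub_r; lra.
  - apply FU_cont; auto.
  - apply C_mult; [apply C_const|apply C_pw_sub_r; auto].
Qed.

(* Integration by parts on [s,c], for s < c < 1. *)
Lemma EE_integral f df s c : (forall y, is_derive f y (df y)) -> (forall y, cont df y) ->
  0 < s < c -> c < 1 ->
  RInt (EE f df s) 0 c = RInt (GL f df s) 0 s + (s * RInt (GU f df s) s c + ZZ f s c) / (1 - s).
Proof.
  intros Hf Hd Hs Hc. assert (Hfc : forall y, cont f y) by (intros y; eapply C_derive; apply Hf).
  assert (HEc : forall x, 0 <= x <= c -> cont (EE f df s) x).
  { intros x Hx. unfold EE. apply C_minus; [apply C_plus|apply C_mult; [apply C_const|apply C_mult]].
    - apply C_mult; [apply C_const|apply fW_cont; auto].
    - apply C_mult; [apply C_plus; [auto|apply C_mult; [apply C_id|auto]]|apply W_cont].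
    - apply fW_cont; auto.
    - apply (C_comp Rinv (fun y => 1 - y)); [apply C_minus; [apply C_const|apply C_id]|].
      apply continuous_Rinv. lra. }
  assert (HGU : ex_RInt (GU f df s) s c)
    by (apply ex_RInt_cont_on; [lra|]; intros; apply GU_cont; auto; lra).
  assert (HdZ : is_RInt (dZ f df s) s c (ZZ f s c - ZZ f s s)).
  { apply (is_RInt_derive (V:=R_CompleteNormedModule) (ZZ f s) (dZ f df s));
      intros x Hx; rewrite Rmin_left, Rmax_right in Hx by lra.
    - apply ZZ_deriv; auto; lra.
    - apply dZ_cont; auto; lra. }
  assert (ZZs : ZZ f s s = 0) by (unfold ZZ; rewrite Rminus_diag, pw_0; ring).
  rewrite ZZs, Rminus_0_r in HdZ.
  assert (Hright : (1 - s) * RInt (EE f df s) s c = s * RInt (GU f df s) s c + ZZ f s c).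
  { rewrite <- RInt_scalR by (apply ex_RInt_cont_on; [lra|]; intros; apply HEc; lra).
    rewrite (RInt_ext _ (fun x => s * GU f df s x + dZ f df s x)).
    - rewrite RInt_plusR, RInt_scalR by (auto || (eexists; exact HdZ) || apply ex_RInt_scalR; auto).
      f_equal. apply is_RInt_unique. exact HdZ.
    - intros x Hx. rewrite Rmin_left, Rmax_right in Hx by lra. apply EE_right; lra. }
  assert (Hleft : RInt (EE f df s) 0 s = RInt (GL f df s) 0 s).
  { apply RInt_ext. intros x Hx. rewrite Rmin_left, Rmax_right in Hx by lra. apply EE_left; lra. }
  rewrite <- (RInt_ChaslesR _ 0 s c) by (apply ex_RInt_cont_on; [lra|]; intros; apply HEc; lra).
  rewrite Hleft, <- Hright. req; genR; field. lra.
Qed.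

Lemma J_euler f df s I : (forall y, is_derive f y (df y)) -> (forall y, cont df y) -> 0 < s < 1 ->
  Integral01 (fun x => f x * W s x / (1 - x)) I ->
  be * I = (al+be+ga) * J f s + J (fun x => f x + x * df x) s - s * DJ f df s.
Proof.
  intros Hf Hd Hs HI. assert (Hfc : forall y, cont f y) by (intros y; eapply C_derive; apply Hf).
  assert (Hf2 : forall y, cont (fun x => (f x + x * df x) * W s x) y).
  { intros y. apply C_mult; [apply C_plus; [auto|apply C_mult; [apply C_id|auto]]|apply W_cont]. }
  (* first limit of int_0^c EE: term by term *)
  assert (Hlim1 : lim1 (fun c => RInt (EE f df s) 0 c)
                       ((al+be+ga) * J f s + J (fun x => f x + x * df x) s - be * I)).
  { apply (lim1_ext (fun c => (al+be+ga) * RInt (fun x => f x * W s x) 0 c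
                    + RInt (fun x => (f x + x * df x) * W s x) 0 c
                    - be * RInt (fun x => f x * W s x / (1 - x)) 0 c) _ _ 1); [lra| |].
    - intros c Hc.
      assert (ex1 : ex_RInt (fun x => f x * W s x) 0 c)
        by (apply ex_RInt_cont; intros; apply fW_cont; auto).
      assert (ex2 : ex_RInt (fun x => (f x + x * df x) * W s x) 0 c) by (apply ex_RInt_cont; auto).
      assert (ex3 : ex_RInt (fun x => f x * W s x / (1 - x)) 0 c).
      { apply ex_RInt_cont_on; [lra|]. intros z Hz.
        apply C_mult; [apply fW_cont; auto|]. apply (C_comp Rinv (fun y => 1 - y)).
        - apply C_minus; [apply C_const|apply C_id].
        - apply continuous_Rinv; lra. }
      unfold EE. rewrite RInt_minusR, RInt_plusR, !RInt_scalR; auto.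
      + apply ex_RInt_scalR; auto.
      + apply ex_RInt_plusR; [apply ex_RInt_scalR|]; auto.
      + apply ex_RInt_scalR; auto.
    - apply lim1_minus; [apply lim1_plus; [apply lim1_scal|]|apply lim1_scal].
      + apply lim1_RInt; [lra|]. intros; apply fW_cont; auto.
      + apply lim1_RInt; auto. lra.
      + apply Integral01_lim1; auto. }
  (* second limit of int_0^c EE: through the integration by parts *)
  assert (Hlim2 : lim1 (fun c => RInt (EE f df s) 0 c) (s * DJ f df s)).
  { apply (lim1_ext (fun c => RInt (GL f df s) 0 s
                               + (s * RInt (GU f df s) s c + ZZ f s c) / (1 - s)) _ _ (1 - s));
      [lra|intros c Hc; symmetry; apply EE_integral; auto; lra|].
    replace (s * DJ f df s)
      with (RInt (GL f df s) 0 s + (s * RInt (GU f df s) s 1 + ZZ f s 1) / (1 - s)).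
    - apply lim1_plus; [apply (lim1_cont (fun _ => _)); apply C_const|].
      apply (lim1_ext (fun c => / (1 - s) * (s * RInt (GU f df s) s c + ZZ f s c)) _ _ 1);
        [lra|intros; field; lra|].
      unfold Rdiv. rewrite Rmult_comm. apply lim1_scal, lim1_plus.
      + apply lim1_scal, lim1_RInt; [lra|]. intros; apply GU_cont; auto; lra.
      + apply lim1_cont. unfold ZZ. apply C_mult; [apply FU_cont; auto|apply C_pw_sub_r; lra].
    - unfold DJ, ZZ, FU. rewrite Rminus_diag, pw_0. req; genR; field. lra. }
  assert (E := lim1_unique _ _ _ Hlim1 Hlim2). lra.
Qed.

Lemma J_ext f g s : (forall x, f x = g x) -> J f s = J g s.
Proof. intros H; unfold J; apply RInt_ext; intros; rewrite H; auto. Qed.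
Lemma exJ f s : (forall x, cont f x) -> ex_RInt (fun x => f x * W s x) 0 1.
Proof. intros H; apply ex_RInt_cont; intros; apply fW_cont; auto. Qed.
Lemma J_plus f g s : (forall x, cont f x) -> (forall x, cont g x) ->
  J (fun x => f x + g x) s = J f s + J g s.
Proof.
  intros Hf Hg. unfold J. rewrite <- RInt_plusR by (apply exJ; auto).
  apply RInt_ext; intros; req; ring.
Qed.
Lemma J_scal f c s : (forall x, cont f x) -> J (fun x => c * f x) s = c * J f s.
Proof.
  intros Hf. unfold J. rewrite <- RInt_scalR by (apply exJ; auto).
  apply RInt_ext; intros; req; ring.
Qed.
Lemma J_sum (g : nat -> R -> R) (d : nat -> R) n s : (forall k x, cont (g k) x) ->
  J (fun x => sumR (fun k => d k * g k x) n) s = sumR (fun k => d k * J (g k) s) n.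
Proof.
  intros Hg. induction n; simpl.
  - unfold J. rewrite (RInt_ext _ (fun _ => 0)); [|intros; req; ring].
    rewrite RInt_const. simpl. unfold scal; simpl; unfold mult; simpl; ring.
  - rewrite J_plus, J_scal, IHn; auto.
    + intros x. apply (C_psum d g n x). intros; auto.
    + intros x; apply C_mult; [apply C_const|auto].
Qed.

(* The norm of a monic polynomial is positive: this is where A >= 0, A + B >= 0 and
   (A, A+B) <> (0, 0) are used. *)
Lemma J_pos p k s : 0 <= A -> 0 <= A + B -> ~ (A = 0 /\ A + B = 0) -> 0 < s < 1 ->
  monic_poly k p -> 0 < J (fun x => p x * p x) s.
Proof.
  intros HA HAB HnAB Hs Hp.
  assert (Hpc := monic_cont k p Hp).
  set (gL := fun x => A * pw x al * pw (1-x) be * pw (s-x) ga).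
  set (gU := fun x => (A+B) * pw x al * pw (1-x) be * pw (x-s) ga).
  assert (HgL : forall x, cont gL x).
  { intros x. unfold gL. apply C_mult; [|apply C_pw_sub_l; auto].
    apply C_mult; [apply C_mult; [apply C_const|apply C_pw; auto]|apply C_pw_sub_l; auto]. }
  assert (HgU : forall x, cont gU x).
  { intros x. unfold gU. apply C_mult; [|apply C_pw_sub_r; auto].
    apply C_mult; [apply C_mult; [apply C_const|apply C_pw; auto]|apply C_pw_sub_l; auto]. }
  assert (Hsplit : J (fun x => p x * p x) s
                   = RInt (fun x => p x * p x * gL x) 0 s + RInt (fun x => p x * p x * gU x) s 1).
  { rewrite J_split by (auto; intros; apply C_mult; auto).
    f_equal; apply RInt_ext; intros; unfold FL, FU, gL, gU; req; ring. }
  assert (HposL : forall x, 0 < x < s -> 0 < A -> 0 < gL x).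
  { intros x Hx HA0. unfold gL. repeat apply Rmult_lt_0_compat; auto; apply pw_gt0; lra. }
  assert (HposU : forall x, s < x < 1 -> 0 < A + B -> 0 < gU x).
  { intros x Hx HA0. unfold gU. repeat apply Rmult_lt_0_compat; auto; apply pw_gt0; lra. }
  assert (HL : 0 <= RInt (fun x => p x * p x * gL x) 0 s).
  { apply (RInt_sq_weight_ge0 p k); auto; [lra|]. intros x Hx. unfold gL.
    repeat apply Rmult_le_pos; auto; apply pw_ge0. }
  assert (HU : 0 <= RInt (fun x => p x * p x * gU x) s 1).
  { apply (RInt_sq_weight_ge0 p k); auto; [lra|]. intros x Hx. unfold gU.
    repeat apply Rmult_le_pos; auto; apply pw_ge0. }
  rewrite Hsplit. destruct (Req_dec A 0) as [HA0|HA0].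
  - assert (0 < RInt (fun x => p x * p x * gU x) s 1).
    { apply (RInt_sq_weight_pos p k); auto; [lra|]. intros; apply HposU; auto; lra. }
    lra.
  - assert (0 < RInt (fun x => p x * p x * gL x) 0 s).
    { apply (RInt_sq_weight_pos p k); auto; [lra|]. intros; apply HposL; auto; lra. }
    lra.
Qed.

Section OrthogonalPolynomials.
Variables (P : nat -> R -> R -> R) (h Rn : nat -> R -> R).
Hypothesis HA : 0 <= A.
Hypothesis HAB : 0 <= A + B.
Hypothesis HnotAB : ~ (A = 0 /\ A + B = 0).
Hypothesis HPmonic : forall n t, 0 < t < 1 -> monic_poly n (P n t).
Hypothesis HPorth : forall m n t, 0 < t < 1 -> m <> n ->
  Integral01 (fun x => P m t x * P n t x * weight al be ga A B t x) 0.
Hypothesis Hh : forall n t, 0 < t < 1 ->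
  Integral01 (fun x => P n t x * P n t x * weight al be ga A B t x) (h n t).
Hypothesis HR : forall n t, 0 < t < 1 ->
  exists I, Integral01 (fun y => P n t y * P n t y * weight al be ga A B t y / (1 - y)) I
    /\ Rn n t = be / h n t * I.

Lemma Pc k s x : 0 < s < 1 -> cont (P k s) x.
Proof. intros Hs; apply (monic_cont k); auto. Qed.
Lemma PPc k l s x : 0 < s < 1 -> cont (fun x => P k s x * P l s x) x.
Proof. intros Hs; apply C_mult; apply Pc; auto. Qed.

Lemma Integral01_J g s v : Integral01 (fun x => g x * weight al be ga A B s x) v ->
  (forall x, cont g x) -> v = J g s.
Proof. intros H Hg. unfold J, W. apply Integral01_RInt; auto. intros; apply (fW_cont g s x Hg). Qed.

Lemma orth k m s : 0 < s < 1 -> k <> m -> J (fun x => P k s x * P m s x) s = 0.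
Proof. intros Hs Hkm. symmetry. apply Integral01_J. apply HPorth; auto. intros; apply PPc; auto. Qed.
Lemma hJ k s : 0 < s < 1 -> h k s = J (fun x => P k s x * P k s x) s.
Proof. intros Hs. apply Integral01_J. apply Hh; auto. intros; apply PPc; auto. Qed.
Lemma hpos k s : 0 < s < 1 -> 0 < h k s.
Proof. intros Hs. rewrite hJ by auto. apply J_pos with k; auto. Qed.

Lemma orth_poly m s q : 0 < s < 1 -> polyb m q -> J (fun x => q x * P m s x) s = 0.
Proof.
  intros Hs Hq.
  destruct (monic_basis_expansion (fun k => P k s) (fun k => HPmonic k s Hs) m q Hq) as [d Hd].
  rewrite (J_ext _ (fun x => sumR (fun k => d k * (P k s x * P m s x)) m)).
  - rewrite J_sum by (intros; apply PPc; auto). rewrite (sumR_ext _ (fun _ => 0)).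
    + apply sumR_zero.
    + intros k Hk. rewrite orth; [ring|auto|lia].
  - intros x. rewrite Hd, sumR_mult_r. apply sumR_ext; intros; ring.
Qed.

(* Mt t k l s: the moment at s of the product of the polynomials frozen at t. *)
Definition Mt t k l s := J (fun x => P k t x * P l t x) s.

Lemma Mt_deriv t k l : 0 < t < 1 -> exists D, is_derive (Mt t k l) t D.
Proof.
  intros Ht. destruct (monic_deriv k (P k t) (HPmonic k t Ht)) as [dk [Hdk [Hdkc _]]].
  destruct (monic_deriv l (P l t) (HPmonic l t Ht)) as [dl [Hdl [Hdlc _]]].
  eexists. apply (J_deriv _ (fun x => dk x * P l t x + P k t x * dl x)); auto.
  - intros y; apply D_mult; auto.
  - intros y; apply C_plus; apply C_mult; auto; apply Pc; auto.
Qed.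

(* With Q = P_n(.,s) - P_n(.,t) = sum_(k<n) c_k P_k(.,t), orthogonality of P_n(.,s) to Q
   at s gives h_n(s) - Mt t n n s = J (Q P_n(.,t)) s = - J (Q^2) s. *)
Lemma h_minus_frozen t n s (c : nat -> R) : 0 < t < 1 -> 0 < s < 1 ->
  (forall x, P n s x - P n t x = sumR (fun k => c k * P k t x) n) ->
  h n s - Mt t n n s = sumR (fun k => c k * Mt t k n s) n /\
  sumR (fun k => c k * Mt t k n s) n =
   - sumR (fun k => c k * sumR (fun l => c l * Mt t k l s) n) n.
Proof.
  intros Ht Hs Hc. unfold Mt.
  set (Q := fun x => P n s x - P n t x).
  assert (HPs : forall x, cont (P n s) x) by (intros; apply Pc; auto).
  assert (HPt : forall x, cont (P n t) x) by (intros; apply Pc; auto).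
  assert (HQc : forall x, cont Q x) by (intros; unfold Q; apply C_minus; auto).
  assert (O1 : J (fun x => Q x * P n s x) s = 0).
  { apply orth_poly; auto. apply monic_sub; apply HPmonic; auto. }
  assert (E1 : h n s = J (fun x => P n t x * P n t x) s + J (fun x => Q x * P n t x) s
                       + J (fun x => Q x * P n s x) s).
  { rewrite hJ, <- !J_plus by (auto; intros; repeat apply C_plus; apply C_mult; auto).
    apply J_ext. intros x; unfold Q; ring. }
  assert (E2 : J (fun x => Q x * P n s x) s
               = J (fun x => Q x * P n t x) s + J (fun x => Q x * Q x) s).
  { rewrite <- J_plus by (intros; apply C_mult; auto). apply J_ext. intros x; unfold Q; ring. }
  assert (E3 : J (fun x => Q x * P n t x) s
               = sumR (fun k => c k * J (fun x => P k t x * P n t x) s) n).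
  { rewrite <- J_sum by (intros; apply PPc; auto). apply J_ext. intros x. unfold Q.
    rewrite Hc, sumR_mult_r. apply sumR_ext; intros; ring. }
  assert (E4 : J (fun x => Q x * Q x) s
               = sumR (fun k => c k * sumR (fun l => c l * J (fun x => P k t x * P l t x) s) n) n).
  { rewrite (J_ext _ (fun x => sumR (fun k => c k * (P k t x * Q x)) n)).
    - rewrite J_sum by (intros; apply C_mult; auto; apply Pc; auto).
      apply sumR_ext. intros k _. f_equal.
      rewrite <- J_sum by (intros; apply PPc; auto). apply J_ext. intros x. unfold Q.
      rewrite Hc, <- sumR_scal. apply sumR_ext; intros; ring.
    - intros x. rewrite (sumR_ext _ (fun k => Q x * (c k * P k t x))) by (intros; ring).
      rewrite sumR_scal. unfold Q at 2. rewrite Hc. reflexivity. }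
  split; [rewrite E1, O1, E3; ring|rewrite <- E3, <- E4; lra].
Qed.

(* The frozen off-diagonal moments Mt t k n s (k < n) vanish at s = t, hence are O(s-t). *)
Lemma frozen_offdiag_small n t : 0 < t < 1 -> exists C d, 0 < d /\
  forall k, (k < n)%nat -> forall s, Rabs (s - t) < d -> (Mt t k n s)^2 <= C * (s - t)^2.
Proof.
  intros Ht. apply (uniform_bound_nbhd (fun k C s => (Mt t k n s)^2 <= C * (s - t)^2)).
  - intros k C C' s HC H. pose proof (pow2_ge_0 (s - t)). nra.
  - intros k Hk. destruct (Mt_deriv t k n Ht) as [Dk HDk].
    apply (sq_bound_of_deriv_zero _ t Dk HDk). unfold Mt. apply orth; auto; lia.
Qed.

Lemma frozen_gram_cont n t eps : 0 < t < 1 -> 0 < eps -> exists d, 0 < d /\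
  forall k l, (k < n)%nat -> (l < n)%nat -> forall s, Rabs (s - t) < d ->
  Rabs (Mt t k l s - Mt t k l t) < eps.
Proof.
  intros Ht Heps.
  destruct (uniform_nbhd (fun k s => forall l, (l < n)%nat -> Rabs (Mt t k l s - Mt t k l t) < eps)
              t n) as [d [Hd H]].
  - intros k Hk.
    destruct (uniform_nbhd (fun l s => Rabs (Mt t k l s - Mt t k l t) < eps) t n) as [d [Hd H]].
    + intros l Hl. destruct (Mt_deriv t k l Ht) as [D HD].
      apply (deriv_cont_eps _ t D HD eps Heps).
    + exists d. split; [auto|]. intros s Hs l Hl. apply H; auto.
  - exists d. split; [auto|]. intros k l Hk Hl s Hs. apply H; auto.
Qed.

(* Writing P_n(.,s) - P_n(.,t) = sum c_k P_k(.,t) and X = sum c_k c_l Mt t k l s,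
   h_n(s) - Mt t n n s = -X; the Gram matrix is coercive near t (lam |c|^2 <= X) and
   X = - sum c_k Mt t k n s, so X <= sum (Mt t k n s)^2 / lam = O((s-t)^2). *)
Lemma h_quadratically_close n t : 0 < t < 1 -> exists C d, 0 < d /\
  forall s, Rabs (s - t) < d -> Rabs (h n s - Mt t n n s) <= C * (s - t)^2.
Proof.
  intros Ht.
  destruct (frozen_offdiag_small n t Ht) as [C [d1 [Hd1 Hm]]].
  destruct (finite_min_pos (fun k => h k t) n) as [l0 [Hl0 Hl0']]; [intros; apply hpos; auto|].
  set (lam := l0 / 2). assert (Hlam : 0 < lam) by (unfold lam; lra).
  assert (Hn0 : 0 <= INR n) by apply pos_INR.
  set (eps := lam / (INR n + 1)).
  assert (Heps : 0 < eps) by (unfold eps; apply Rdiv_lt_0_compat; lra).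
  assert (Hepsn : eps * INR n <= lam).
  { unfold eps. apply Rmult_le_reg_r with (INR n + 1); [lra|].
    replace (lam / (INR n + 1) * INR n * (INR n + 1)) with (lam * INR n) by (field; lra). nra. }
  destruct (frozen_gram_cont n t eps Ht Heps) as [d2 [Hd2 He]].
  exists (INR n * C / lam), (Rmin (Rmin t (1 - t)) (Rmin d1 d2)).
  split; [repeat apply Rmin_pos; lra|]. intros s Hs.
  pose proof (Rmin_l (Rmin t (1 - t)) (Rmin d1 d2)).
  pose proof (Rmin_r (Rmin t (1 - t)) (Rmin d1 d2)).
  pose proof (Rmin_l t (1 - t)); pose proof (Rmin_r t (1 - t)).
  pose proof (Rmin_l d1 d2); pose proof (Rmin_r d1 d2).
  assert (Hs' : 0 < s < 1) by (apply Rabs_def2 in Hs; lra).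
  destruct (monic_basis_expansion (fun k => P k t) (fun k => HPmonic k t Ht) n
              (fun x => P n s x - P n t x)) as [c Hc].
  { apply monic_sub; apply HPmonic; auto. }
  destruct (h_minus_frozen t n s c Ht Hs' Hc) as [E1 E2].
  set (X := sumR (fun k => c k * sumR (fun l => c l * Mt t k l s) n) n) in *.
  assert (Hcoer : lam * sumR (fun k => c k ^ 2) n <= X).
  { apply (quad_form_coercive c (fun k l => Mt t k l s) (fun k l => Mt t k l t) lam eps n);
      auto; [lra| | |].
    - intros k Hk. unfold Mt. rewrite <- hJ by auto. specialize (Hl0' k Hk). unfold lam. lra.
    - intros k l Hk Hl Hkl. apply orth; auto.
    - intros k l Hk Hl. left. apply He; auto; lra. }
  assert (HX : X <= sumR (fun k => Mt t k n s ^ 2) n / lam)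
    by (apply (quad_form_upper c (fun k => Mt t k n s)); auto; lra).
  assert (Hsum : sumR (fun k => Mt t k n s ^ 2) n <= INR n * C * (s - t)^2).
  { rewrite Rmult_assoc, <- sumR_const. apply sumR_le. intros k Hk. apply Hm; auto; lra. }
  assert (X <= INR n * C / lam * (s - t)^2).
  { apply Rle_trans with (sumR (fun k => Mt t k n s ^ 2) n / lam); auto.
    replace (INR n * C / lam * (s - t)^2) with (INR n * C * (s - t)^2 / lam) by (field; lra).
    unfold Rdiv. apply Rmult_le_compat_r; auto. left; apply Rinv_0_lt_compat; lra. }
  assert (0 <= X) by (pose proof (pow2_ge_0 (c 0%nat)); eapply Rle_trans; [|apply Hcoer];
                      apply Rmult_le_pos; [lra|apply sumR_ge0; intros; apply pow2_ge_0]).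
  rewrite E1, E2, Rabs_Ropp, Rabs_right by lra. auto.
Qed.

Lemma h_euler n t : 0 < t < 1 -> 0 < h n t /\ exists D, is_derive (h n) t D /\
  t * D = (al + be + ga + 2 * INR n + 1 - Rn n t) * h n t.
Proof.
  intros Ht. split; [apply hpos; auto|].
  destruct (monic_deriv n (P n t) (HPmonic n t Ht)) as [dp [Hdp [Hdpc Hpoly]]].
  set (f := fun x => P n t x * P n t x).
  set (df := fun x => dp x * P n t x + P n t x * dp x).
  assert (HPt : forall x, cont (P n t) x) by (intros; apply Pc; auto).
  assert (Hf : forall y, is_derive f y (df y)) by (intros; apply D_mult; auto).
  assert (Hdf : forall y, cont df y) by (intros; unfold df; apply C_plus; apply C_mult; auto).
  assert (Hh0 : h n t = J f t) by (apply hJ; auto).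
  exists (DJ f df t). split.
  - destruct (h_quadratically_close n t Ht) as [C [d [Hd Hc]]].
    apply (deriv_of_quadratic_contact (h n) (J f) t _ C d Hd); auto.
    apply J_deriv; auto.
  - destruct (HR n t Ht) as [I [HI HRn]].
    assert (Heul := J_euler f df t I Hf Hdf Ht HI).
    (* f + x f' = (2n+1) P_n^2 + 2 (x P_n' - n P_n) P_n, and the last term is orthogonal *)
    assert (Hx : J (fun x => f x + x * df x) t = (1 + 2 * INR n) * h n t).
    { assert (Hq : forall x, cont (fun x => x * dp x - INR n * P n t x) x).
      { intros; apply C_minus; apply C_mult; auto; apply C_id || apply C_const. }
      rewrite (J_ext _ (fun x => (1 + 2 * INR n) * f x
                                 + 2 * ((x * dp x - INR n * P n t x) * P n t x)))
        by (intros x; unfold f, df; ring).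
      rewrite J_plus, J_scal, J_scal, orth_poly, Hh0; auto; try (req; ring);
        intros; repeat apply C_mult; auto; apply C_const. }
    pose proof (hpos n t Ht).
    rewrite Hx, <- Hh0 in Heul. rewrite HRn.
    replace ((al + be + ga + 2 * INR n + 1 - be / h n t * I) * h n t)
      with ((al + be + ga) * h n t + (1 + 2 * INR n) * h n t - be * I) by (field; lra).
    lra.
Qed.

End OrthogonalPolynomials.
End Weight.

Lemma ln_deriv_of_euler (f : R -> R) t D e : 0 < f t -> is_derive f t D -> t * D = e * f t ->
  exists l, derivable_pt_lim (fun s => ln (f s)) t l /\ t * l = e.
Proof.
  intros Hpos HD HE. exists (D * / f t). split.
  - apply is_derive_Reals. apply (D_comp ln f t (/ f t) D); auto.
    apply is_derive_Reals, derivable_pt_lim_ln; auto.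
  - replace (t * (D * / f t)) with ((t * D) / f t) by (field; lra). rewrite HE. field. lra.
Qed.

Lemma ratio_deriv_of_euler (f g : R -> R) t Df Dg ef eg : 0 < g t ->
  is_derive f t Df -> t * Df = ef * f t -> is_derive g t Dg -> t * Dg = eg * g t ->
  exists l, derivable_pt_lim (fun s => f s / g s) t l /\ t * l = f t / g t * (ef - eg).
Proof.
  intros Hg HDf HEf HDg HEg. exists ((Df * g t - f t * Dg) / g t ^ 2). split.
  - apply is_derive_Reals. apply is_derive_div; auto. lra.
  - replace (t * ((Df * g t - f t * Dg) / g t ^ 2))
      with (((t * Df) * g t - f t * (t * Dg)) / g t ^ 2) by (field; lra).
    rewrite HEf, HEg. field. lra.
Qed.

Lemma prod_euler (h : nat -> R -> R) (e : nat -> R) t n :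
  (forall j, 0 < h j t /\ exists D, is_derive (h j) t D /\ t * D = e j * h j t) ->
  0 < prodR (fun j => h j t) n /\ exists D, is_derive (fun s => prodR (fun j => h j s) n) t D /\
    t * D = sumR e n * prodR (fun j => h j t) n.
Proof.
  intros Hh. induction n as [|m [IHp [Dp [IHd IHe]]]].
  - simpl. split; [lra|]. exists 0. split; [apply D_const|ring].
  - destruct (Hh m) as [Hpm [Dm [HDm HEm]]]. simpl prodR. simpl sumR.
    split; [apply Rmult_lt_0_compat; auto|].
    exists (Dp * h m t + prodR (fun j => h j t) m * Dm). split; [apply D_mult; auto|].
    replace (t * (Dp * h m t + prodR (fun j => h j t) m * Dm))
      with ((t * Dp) * h m t + prodR (fun j => h j t) m * (t * Dm)) by ring.
    rewrite IHe, HEm. ring.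
Qed.

Lemma sum_euler_exponents al be ga (Rn : nat -> R -> R) t n :
  sumR (fun j => al + be + ga + 2 * INR j + 1 - Rn j t) n
  = INR n * (INR n + al + be + ga) - sumR (fun j => Rn j t) n.
Proof. induction n; simpl sumR; [simpl; ring|rewrite IHn, S_INR; ring]. Qed.

Theorem mainTheorem6
  (al be ga A B : R)
  (Hal : 0 < al) (Hbe : 0 < be) (Hga : 0 < ga)
  (HA : 0 <= A) (HAB : 0 <= A + B) (HnotAB : ~ (A = 0 /\ A + B = 0))
  (P : nat -> R -> R -> R)
  (h : nat -> R -> R)
  (Rn : nat -> R -> R)
  (HPmonic : forall n t, 0 < t < 1 -> monic_poly n (P n t))
  (HPorth : forall m n t, 0 < t < 1 -> m <> n ->
     Integral01 (fun x => P m t x * P n t x * weight al be ga A B t x) 0)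
  (Hh : forall n t, 0 < t < 1 ->
     Integral01 (fun x => P n t x * P n t x * weight al be ga A B t x) (h n t))
  (HR : forall n t, 0 < t < 1 ->
     exists I, Integral01
       (fun y => P n t y * P n t y * weight al be ga A B t y / (1 - y)) I
     /\ Rn n t = be / h n t * I) :
  (forall (n : nat) (t : R), 0 < t < 1 ->
     exists l, derivable_pt_lim (fun s => ln (h n s)) t l /\
       t * l = al + be + ga + 2 * INR n + 1 - Rn n t)
  /\
  (forall (n : nat) (t : R), (1 <= n)%nat -> 0 < t < 1 ->
     exists l, derivable_pt_lim (fun s => h n s / h (n - 1)%nat s) t l /\
       t * l = (h n t / h (n - 1)%nat t) * (2 - Rn n t + Rn (n - 1)%nat t))
  /\
  (forall (n : nat) (t : R), 0 < t < 1 ->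
     exists l, derivable_pt_lim (fun s => ln (prodR (fun j => h j s) n)) t l /\
       t * (t - 1) * l =
         INR n * (INR n + al + be + ga) * (t - 1)
         - (t - 1) * sumR (fun j => Rn j t) n).
Proof.
  pose proof (h_euler al be ga A B Hal Hbe Hga P h Rn HA HAB HnotAB HPmonic HPorth Hh HR) as HE.
  split; [|split].
  - intros n t Ht. destruct (HE n t Ht) as [Hpos [D [HD HDe]]].
    apply (ln_deriv_of_euler (h n) t D); auto.
  - intros n t Hn Ht. destruct (HE n t Ht) as [_ [D1 [HD1 HE1]]].
    destruct (HE (n-1)%nat t Ht) as [Hp0 [D0 [HD0 HE0]]].
    replace (2 - Rn n t + Rn (n - 1)%nat t)
      with ((al + be + ga + 2 * INR n + 1 - Rn n t)
            - (al + be + ga + 2 * INR (n - 1) + 1 - Rn (n - 1)%nat t))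
      by (rewrite minus_INR by lia; simpl; ring).
    apply (ratio_deriv_of_euler (h n) (h (n-1)%nat) t D1 D0); auto.
  - intros n t Ht. destruct (prod_euler h (fun j => al + be + ga + 2 * INR j + 1 - Rn j t) t n)
      as [Hp [D [HD HDe]]]; [intros j; apply HE; auto|].
    destruct (ln_deriv_of_euler _ t D _ Hp HD HDe) as [l [Hl Hle]].
    exists l. split; auto.
    replace (t * (t - 1) * l) with ((t - 1) * (t * l)) by ring.
    rewrite Hle, sum_euler_exponents. ring.
Qed.
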